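(* Let $\lambda\le\kappa$ be infinite cardinals and let $\mathcal{K}$ be an abstract elementary class with $\mathrm{LS}(\mathcal{K})\le\kappa$ such that $\mathcal{K}_\kappa$ has amalgamation. Let $\mathcal{T}\subseteq{}^{<\lambda^+}(\lambda^+)$, ordered by $\trianglelefteq$ (being an initial segment), be a tree each of whose levels has size $\le\lambda^+$, and for $\eta\in\mathcal{T}$ let $M_\eta\in\mathcal{K}$ with $\|M_\eta\|=\kappa$, such that $\eta\trianglelefteq\nu$ implies $M_\eta\le_{\mathcal K}M_\nu$. Then there are $M^\ast\in\mathcal{K}$ and maps $\langle g_\eta:\eta\in\mathcal{T}\rangle$ such that (A) each $g_\eta$ is a $\le_{\mathcal K}$-embedding of $M_\eta$ into $M^\ast$; (B) $\eta\trianglelefteq\nu$ implies $g_\eta\subseteq g_\nu$; (C) $\|M^\ast\|\le\kappa\cdot\lambda^+$.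
   Context: An abstract elementary class is a class $\mathcal K$ of models of a fixed vocabulary $\tau$ with a binary relation $\le_{\mathcal K}$ such that: $\mathcal K$ is closed under isomorphism and $\le_{\mathcal K}$ is preserved by isomorphisms; $M\le_{\mathcal K}N$ implies $M$ is a submodel of $N$; $\le_{\mathcal K}$ is a partial order; the union of a $\le_{\mathcal K}$-increasing continuous chain of members of $\mathcal K$ is in $\mathcal K$ and is the $\le_{\mathcal K}$-least upper bound of the chain; if $M_0,M_1\le_{\mathcal K}N$ and $M_0$ is a submodel of $M_1$ then $M_0\le_{\mathcal K}M_1$; and there is a cardinal $\kappa$ such that for every $M\in\mathcal K$ and $A\subseteq|M|$ there is $N\le_{\mathcal K}M$ with $A\subseteq|N|$ and $|N|\le\kappa\cdot(|A|+1)$; the least such $\kappa$ is $\mathrm{LS}(\mathcal K)$. $\mathcal K_\kappa$ is the class of members of $\mathcal K$ of cardinality $\kappa$. A $\le_{\mathcal K}$-embedding of $M$ into $N$ is an isomorphism of $M$ onto some $M'\le_{\mathcal K}N$. $\mathcal K_\kappa$ has amalgamation if for all $M_0,M_1,M_2\in\mathcal K_\kappa$ and $\le_{\mathcal K}$-embeddings $g_l:M_0\to M_l$ ($l=1,2$) there are $N\in\mathcal K_\kappa$ and $\le_{\mathcal K}$-embeddings $f_l:M_l\to N$ with $f_1\circ g_1=f_2\circ g_2$. *)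

(* Abstract elementary classes, presented with carriers as
   Rocq types and the strong-substructure relation given on embeddings. *)
From Stdlib Require Import PeanoNat.




Definition card_le (A B : Type) : Prop :=
  exists f : A -> B, forall x y, f x = f y -> x = y.
Definition card_eq (A B : Type) : Prop :=
  exists f : A -> B, (forall x y, f x = f y -> x = y) /\ (forall b, exists a, f a = b).
Definition infinite_type (A : Type) : Prop := card_le nat A.

(* strict well-orders (= ordinals, up to isomorphism) *)
Definition well_order {I : Type} (lt : I -> I -> Prop) : Prop :=
  well_founded lt /\
  (forall i j k, lt i j -> lt j k -> lt i k) /\
  (forall i j, lt i j \/ i = j \/ lt j i).

(* (W, lt) is (an isomorphic copy of) the ordinal lambda^+, lambda = |Lam|:
   a well-order all of whose proper initial segments have size <= lambda,
   while W itself has size > lambda. *)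
Definition is_succ_card_ordinal (Lam : Type) {W : Type} (lt : W -> W -> Prop) : Prop :=
  well_order lt /\
  (forall a : W, card_le {b : W | lt b a} Lam) /\
  ~ card_le W Lam.

Record vocab := Vocab {
  fsym : Type; farity : fsym -> nat;
  rsym : Type; rarity : rsym -> nat }.

Record structure (tau : vocab) := Structure {
  car :> Type;
  fint : forall F : fsym tau, ({k : nat | k < farity tau F} -> car) -> car;
  rint : forall R : rsym tau, ({k : nat | k < rarity tau R} -> car) -> Prop }.

Arguments car {tau} s.
Arguments fint {tau} s F xs.
Arguments rint {tau} s R xs.

Definition is_embedding {tau} (M N : structure tau) (f : car M -> car N) : Prop :=
  (forall x y, f x = f y -> x = y) /\
  (forall F xs, f (fint M F xs) = fint N F (fun k => f (xs k))) /\
  (forall R xs, rint M R xs <-> rint N R (fun k => f (xs k))).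

Definition is_iso {tau} (M N : structure tau) (f : car M -> car N) : Prop :=
  is_embedding M N f /\ (forall y, exists x, f x = y).

(* the maps fm i j (for i <= j) of a chain are given as a family *)
Definition union_cocone {tau} {I : Type} (lt : I -> I -> Prop) (S : I -> Prop)
  (Mi : I -> structure tau) (fm : forall i j, car (Mi i) -> car (Mi j))
  (U : structure tau) (u : forall i, car (Mi i) -> car U) : Prop :=
  (forall i, S i -> is_embedding (Mi i) U (u i)) /\
  (forall i j, S i -> S j -> lt i j -> forall x, u j (fm i j x) = u i x) /\
  (forall y, exists i, S i /\ exists x, u i x = y).

Definition is_limit {I : Type} (lt : I -> I -> Prop) (j : I) : Prop :=
  (exists i, lt i j) /\ (forall i, lt i j -> exists k, lt i k /\ lt k j).

Definition LS_property {tau} (inK : structure tau -> Prop)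
  (leK : forall M N : structure tau, (car M -> car N) -> Prop) (Kap : Type) : Prop :=
  forall M, inK M -> forall A : car M -> Prop,
    exists (N : structure tau) (f : car N -> car M),
      leK N M f /\ (forall a, A a -> exists n, f n = a) /\
      card_le (car N) (Kap * option {a : car M | A a}).

(* leK M N f  means: f is a <=_K-embedding of M into N
   (an isomorphism of M onto some M' <=_K N). *)
Record AEC (tau : vocab) := MkAEC {
  inK : structure tau -> Prop;
  leK : forall M N : structure tau, (car M -> car N) -> Prop;
  leK_inK : forall M N f, leK M N f -> inK M /\ inK N;
  leK_emb : forall M N f, leK M N f -> is_embedding M N f;
  inK_iso : forall M N f, inK M -> is_iso M N f -> inK N;
  leK_iso : forall M N f, inK M -> is_iso M N f -> leK M N f;
  leK_comp : forall M N P f g, leK M N f -> leK N P g -> leK M P (fun x => g (f x));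
  leK_coh : forall M0 M1 N f0 f1 (h : car M0 -> car M1),
      leK M0 N f0 -> leK M1 N f1 -> (forall x, f1 (h x) = f0 x) -> leK M0 M1 h;
  leK_chain : forall (I : Type) (lt : I -> I -> Prop), well_order lt -> inhabited I ->
      forall (Mi : I -> structure tau) (fm : forall i j, car (Mi i) -> car (Mi j)),
      (forall i j, lt i j -> leK (Mi i) (Mi j) (fm i j)) ->
      (forall i, inK (Mi i)) ->
      (forall i j k, lt i j -> lt j k -> forall x, fm j k (fm i j x) = fm i k x) ->
      (forall j, is_limit lt j ->
         union_cocone lt (fun i => lt i j) Mi fm (Mi j) (fun i => fm i j)) ->
      forall (U : structure tau) (u : forall i, car (Mi i) -> car U),
      union_cocone lt (fun _ => True) Mi fm U u ->
      inK U /\ (forall i, leK (Mi i) U (u i)) /\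
      (forall (N : structure tau) (g : forall i, car (Mi i) -> car N),
         (forall i, leK (Mi i) N (g i)) ->
         (forall i j, lt i j -> forall x, g j (fm i j x) = g i x) ->
         forall h : car U -> car N, (forall i x, h (u i x) = g i x) -> leK U N h);
  LS_exists : exists Theta : Type, LS_property inK leK Theta }.

Arguments inK {tau} a _.
Arguments leK {tau} a M N _.

Definition K_card {tau} (K : AEC tau) (Kap : Type) (M : structure tau) : Prop :=
  inK K M /\ card_eq (car M) Kap.

Definition amalgamation {tau} (K : AEC tau) (Kap : Type) : Prop :=
  forall (M0 M1 M2 : structure tau) (g1 : car M0 -> car M1) (g2 : car M0 -> car M2),
    K_card K Kap M0 -> K_card K Kap M1 -> K_card K Kap M2 ->
    leK K M0 M1 g1 -> leK K M0 M2 g2 ->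
    exists (N : structure tau) (f1 : car M1 -> car N) (f2 : car M2 -> car N),
      K_card K Kap N /\ leK K M1 N f1 /\ leK K M2 N f2 /\
      (forall x, f1 (g1 x) = f2 (g2 x)).

Record wseq {W : Type} (lt : W -> W -> Prop) := WSeq {
  len : W;
  ent : forall b : W, lt b len -> W }.
Arguments len {W lt} _.
Arguments ent {W lt} _ b _.

Definition initseg {W} {lt : W -> W -> Prop} (eta nu : wseq lt) : Prop :=
  (len eta = len nu \/ lt (len eta) (len nu)) /\
  (forall b (p : lt b (len eta)) (q : lt b (len nu)), ent eta b p = ent nu b q).

Definition is_subtree {W} {lt : W -> W -> Prop} (T : wseq lt -> Prop) : Prop :=
  forall eta nu, T nu -> initseg eta nu -> T eta.

Definition levels_le {W} {lt : W -> W -> Prop} (T : wseq lt -> Prop) : Prop :=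
  forall a : W, card_le {eta : wseq lt | T eta /\ len eta = a} W.

(* Enumerate the tree [T] in order type [lambda^+]: it has [lambda^+] levels of size at most
   [lambda^+].  By recursion on [alpha < lambda^+] build a continuous increasing chain of models
   of size [kappa], all substructures of one fixed universe [option W * Kap] (an element is tagged
   by the stage at which it was added), together with commuting [<=_K]-embeddings of the [M eta]
   for [eta] in a downward closed subtree containing the first [alpha] enumerated nodes.  At a
   successor stage the next node [eta] is added by amalgamating [M eta] with the current model
   over the union of the images in [M eta] of its predecessors already present; this union is a
   [<=_K]-submodel of both, by the chain axiom applied to a continuous refinement of the chain
   of predecessors.  Limit stages are unions.  The union of the whole chain has size at most
   [kappa * lambda^+] and receives every [M eta]. *)

From Stdlib Require Import Classical ClassicalEpsilon FunctionalExtensionality ProofIrrelevance.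
From Stdlib Require Import PeanoNat Lia Inverse_Image Cantor.
From mathcomp Require classical_sets boolp.

(** * Cardinal arithmetic *)

Lemma proj1_sig_inj {X} {P : X -> Prop} (a b : {x | P x}) : proj1_sig a = proj1_sig b -> a = b.
Proof. apply eq_sig_hprop. intros; apply proof_irrelevance. Qed.

Lemma zorn_premaximal (T : Type) (t0 : T) (R : T -> T -> Prop) :
  (forall t, R t t) -> (forall r s t, R r s -> R s t -> R r t) ->
  (forall C : T -> Prop, (forall s t, C s -> C t -> R s t \/ R t s) ->
     exists t, forall s, C s -> R s t) ->
  exists t, forall s, R t s -> R s t.
Proof.
  intros Rrefl Rtrans Rchain.
  destruct (@classical_sets.ZL_preorder T t0 (fun a b => boolp.asbool (R a b))) as [t tmax].
  - intros s; apply boolp.asboolT; auto.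
  - intros r s t H1 H2; apply boolp.asboolT.
    apply (Rtrans r s t); apply boolp.asboolW; assumption.
  - intros C HC. destruct (Rchain C) as [t Ht].
    + intros s u Cs Cu. destruct (HC s u Cs Cu) as [H|H]; [left|right];
        apply boolp.asboolW; exact H.
    + exists t. intros s Cs. apply boolp.asboolT. auto.
  - exists t. intros s Rts. apply boolp.asboolW, tmax, boolp.asboolT, Rts.
Qed.

Lemma card_le_refl A : card_le A A.
Proof. exists (fun x => x); auto. Qed.

Lemma card_le_trans A B C : card_le A B -> card_le B C -> card_le A C.
Proof.
  intros [f Hf] [g Hg]. exists (fun x => g (f x)). intros x y H. apply Hf, Hg, H.
Qed.

Lemma card_eq_le A B : card_eq A B -> card_le A B.
Proof. intros [f [Hf _]]; exists f; exact Hf. Qed.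

Lemma card_eq_ge A B : card_eq A B -> card_le B A.
Proof.
  intros [f [_ Hs]].
  exists (fun b => proj1_sig (constructive_indefinite_description _ (Hs b))).
  intros x y H.
  destruct (constructive_indefinite_description _ (Hs x)) as [a Ha].
  destruct (constructive_indefinite_description _ (Hs y)) as [a' Ha']. simpl in H.
  congruence.
Qed.

Lemma card_le_prod A B C D : card_le A C -> card_le B D -> card_le (A * B) (C * D).
Proof.
  intros [f Hf] [g Hg]. exists (fun p => (f (fst p), g (snd p))).
  intros [a b] [c d] E. inversion E. f_equal; auto.
Qed.

Lemma card_le_option A B : card_le A B -> card_le (option A) (option B).
Proof.
  intros [f Hf]. exists (option_map f).
  intros [a|] [b|] E; inversion E; auto. f_equal; auto.
Qed.

Section SchroederBernstein.
Variables (A B : Type) (f : A -> B) (g : B -> A).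
Hypotheses (f_inj : forall x y, f x = f y -> x = y) (g_inj : forall x y, g x = g y -> x = y).

Fixpoint sb_orbit (n : nat) : A -> Prop :=
  match n with
  | 0 => fun a => ~ exists b, g b = a
  | S n => fun a => exists a', sb_orbit n a' /\ g (f a') = a
  end.

Definition sb_chained (a : A) := exists n, sb_orbit n a.

Definition sb_map (a : A) : B :=
  match excluded_middle_informative (sb_chained a) with
  | left _ => f a
  | right _ => epsilon (inhabits (f a)) (fun b => g b = a)
  end.

Lemma sb_map_unchained a : ~ sb_chained a -> g (sb_map a) = a.
Proof.
  intros H. unfold sb_map. destruct (excluded_middle_informative _); [contradiction|].
  apply (epsilon_spec (inhabits (f a)) (fun b => g b = a)).
  apply NNPP. intros Hn. apply H. exists 0. exact Hn.
Qed.

Lemma sb_map_chained a : sb_chained a -> sb_map a = f a.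
Proof. intros H. unfold sb_map. destruct (excluded_middle_informative _); [reflexivity|contradiction]. Qed.

Lemma sb_map_inj x y : sb_map x = sb_map y -> x = y.
Proof.
  intros E.
  destruct (classic (sb_chained x)) as [cx|cx]; destruct (classic (sb_chained y)) as [cy|cy].
  - rewrite !sb_map_chained in E; auto.
  - exfalso. apply cy. rewrite <- (sb_map_unchained y cy), <- E, sb_map_chained by exact cx.
    destruct cx as [n Hn]. exists (S n), x. auto.
  - exfalso. apply cx. rewrite <- (sb_map_unchained x cx), E, sb_map_chained by exact cy.
    destruct cy as [n Hn]. exists (S n), y. auto.
  - rewrite <- (sb_map_unchained x cx), <- (sb_map_unchained y cy), E. reflexivity.
Qed.

Lemma sb_map_surj b : exists a, sb_map a = b.
Proof.
  destruct (classic (sb_chained (g b))) as [[[|n] Hn]|c].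
  - exfalso. apply Hn. exists b; reflexivity.
  - destruct Hn as [a' [Ha' E]]. exists a'.
    rewrite sb_map_chained by (exists n; exact Ha'). apply g_inj, E.
  - exists (g b). apply g_inj, sb_map_unchained, c.
Qed.

End SchroederBernstein.

Lemma card_le_antisym A B : card_le A B -> card_le B A -> card_eq A B.
Proof.
  intros [f Hf] [g Hg]. exists (sb_map A B f g).
  split; [apply sb_map_inj|apply sb_map_surj]; assumption.
Qed.

Section Comparability.
Variables A B : Type.

Definition partial_bijection (R : A -> B -> Prop) : Prop :=
  (forall a b b', R a b -> R a b' -> b = b') /\ (forall a a' b, R a b -> R a' b -> a = a').

Definition sub_relation (R R' : A -> B -> Prop) := forall a b, R a b -> R' a b.

Lemma partial_bijection_chain_ub (C : {R | partial_bijection R} -> Prop) :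
  (forall s t : {R | partial_bijection R}, C s -> C t ->
     sub_relation (proj1_sig s) (proj1_sig t) \/
     sub_relation (proj1_sig t) (proj1_sig s)) ->
  exists t : {R | partial_bijection R}, forall s, C s -> sub_relation (proj1_sig s) (proj1_sig t).
Proof.
  intros HC.
  set (U := fun a b => exists s, C s /\ proj1_sig s a b).
  assert (HU : partial_bijection U).
  { split.
    - intros a b b' [s [Cs H1]] [s' [Cs' H2]].
      destruct (HC s s' Cs Cs') as [L|L]; [apply L in H1|apply L in H2].
      + exact (proj1 (proj2_sig s') a b b' H1 H2).
      + exact (proj1 (proj2_sig s) a b b' H1 H2).
    - intros a a' b [s [Cs H1]] [s' [Cs' H2]].
      destruct (HC s s' Cs Cs') as [L|L]; [apply L in H1|apply L in H2].
      + exact (proj2 (proj2_sig s') a a' b H1 H2).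
      + exact (proj2 (proj2_sig s) a a' b H1 H2). }
  exists (exist _ U HU). intros s Cs a b H. exists s. auto.
Qed.

(* A maximal partial bijection cannot miss a point on both sides: it would extend by that pair. *)
Lemma maximal_partial_bijection_full (R : A -> B -> Prop) : partial_bijection R ->
  (forall R', partial_bijection R' -> sub_relation R R' -> sub_relation R' R) ->
  (forall a, exists b, R a b) \/ (forall b, exists a, R a b).
Proof.
  intros [Rfun Rinj] Rmax. apply NNPP. intros Hn.
  apply not_or_and in Hn as [[a0 Ha0]%not_all_ex_not [b0 Hb0]%not_all_ex_not].
  set (R' := fun a b => R a b \/ (a = a0 /\ b = b0)).
  assert (HR' : partial_bijection R').
  { split.
    - intros a b b' [H1|[-> ->]] [H2|[E ->]]; eauto.
      + subst. exfalso; apply Ha0; eauto.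
      + exfalso; apply Ha0; eauto.
    - intros a a' b [H1|[-> ->]] [H2|[-> E]]; eauto.
      + subst. exfalso; apply Hb0; eauto.
      + exfalso; apply Hb0; eauto. }
  apply Ha0. exists b0. apply (Rmax R' HR'); [intros a b H; left; exact H|right; auto].
Qed.

Lemma card_le_total : card_le A B \/ card_le B A.
Proof.
  assert (t0 : {R | partial_bijection R}).
  { exists (fun _ _ => False). split; intros; contradiction. }
  destruct (zorn_premaximal _ t0
              (fun s t : {R | partial_bijection R} => sub_relation (proj1_sig s) (proj1_sig t)))
    as [[R HR] Rmax].
  - intros s a b; auto.
  - intros r s t H1 H2 a b H; auto.
  - exact partial_bijection_chain_ub.
  - destruct (maximal_partial_bijection_full R HR) as [Htot|Hsurj].
    + intros R' HR'. exact (Rmax (exist _ R' HR')).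
    + left. exists (fun a => proj1_sig (constructive_indefinite_description _ (Htot a))).
      intros x y E.
      destruct (constructive_indefinite_description _ (Htot x)) as [b Hb].
      destruct (constructive_indefinite_description _ (Htot y)) as [b' Hb']. simpl in E.
      subst. exact (proj2 HR _ _ _ Hb Hb').
    + right. exists (fun b => proj1_sig (constructive_indefinite_description _ (Hsurj b))).
      intros x y E.
      destruct (constructive_indefinite_description _ (Hsurj x)) as [a Ha].
      destruct (constructive_indefinite_description _ (Hsurj y)) as [a' Ha']. simpl in E.
      subst. exact (proj1 HR _ _ _ Ha Ha').
Qed.

End Comparability.

Section Pairings.
Variables (A : Type) (i : nat -> A).
Hypothesis i_inj : forall m n, i m = i n -> m = n.

(* The domain contains the copy [i] of [nat], which supplies the tags [i 0] and [i 1]. *)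
Record pairing := Pairing {
  pdom : A -> Prop;
  pmap : A -> A -> A;
  pdom_nat : forall n, pdom (i n);
  pmap_dom : forall x y, pdom x -> pdom y -> pdom (pmap x y);
  pmap_inj : forall x y x' y', pdom x -> pdom y -> pdom x' -> pdom y' ->
     pmap x y = pmap x' y' -> x = x' /\ y = y' }.

Definition pairing_le (p q : pairing) : Prop :=
  (forall x, pdom p x -> pdom q x) /\
  (forall x y, pdom p x -> pdom p y -> pmap p x y = pmap q x y).

Definition nat_index (x : A) : nat := epsilon (inhabits 0) (fun n => i n = x).

Lemma nat_index_i n : nat_index (i n) = n.
Proof.
  apply i_inj. unfold nat_index.
  apply (epsilon_spec (inhabits 0) (fun m => i m = i n)). eauto.
Qed.

Definition nat_pairing : pairing.
Proof.
  refine (Pairing (fun x => exists n, i n = x)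
            (fun x y => i (Cantor.to_nat (nat_index x, nat_index y))) _ _ _).
  - intros n; eauto.
  - intros; eauto.
  - intros x y x' y' [a <-] [b <-] [c <-] [d <-] E.
    apply i_inj, (f_equal Cantor.of_nat) in E. rewrite !Cantor.cancel_of_to, !nat_index_i in E.
    injection E as -> ->. auto.
Defined.

Lemma pairing_chain_ub (C : pairing -> Prop) :
  (forall s t, C s -> C t -> pairing_le s t \/ pairing_le t s) ->
  exists t, forall s, C s -> pairing_le s t.
Proof.
  intros HC. destruct (classic (exists s, C s)) as [[s0 Cs0]|Hne].
  2:{ exists nat_pairing. intros s Cs; exfalso; eauto. }
  set (U := fun x => exists s, C s /\ pdom s x).
  assert (common : forall x y, U x -> U y -> exists s, C s /\ pdom s x /\ pdom s y).
  { intros x y [s [Cs Hx]] [t [Ct Hy]]. destruct (HC s t Cs Ct) as [[L _]|[L _]].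
    - exists t; auto. - exists s; auto. }
  assert (coherent : forall s t x y, C s -> C t -> pdom s x -> pdom s y -> pdom t x -> pdom t y ->
     pmap s x y = pmap t x y).
  { intros s t x y Cs Ct H1 H2 H3 H4. destruct (HC s t Cs Ct) as [[_ L]|[_ L]].
    - apply L; auto. - symmetry; apply L; auto. }
  set (sel := fun x y => epsilon (inhabits nat_pairing) (fun s => C s /\ pdom s x /\ pdom s y)).
  assert (sel_spec : forall x y, U x -> U y -> C (sel x y) /\ pdom (sel x y) x /\ pdom (sel x y) y).
  { intros x y Hx Hy. apply (epsilon_spec (inhabits nat_pairing)). apply common; auto. }
  set (F := fun x y => pmap (sel x y) x y).
  assert (F_spec : forall s x y, C s -> pdom s x -> pdom s y -> F x y = pmap s x y).
  { intros s x y Cs Hx Hy. destruct (sel_spec x y) as [H1 [H2 H3]]; try (exists s; auto).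
    apply coherent; auto. }
  unshelve eexists (Pairing U F _ _ _).
  - intros n. exists s0. split; [auto|apply pdom_nat].
  - intros x y Hx Hy. destruct (sel_spec x y Hx Hy) as [H1 [H2 H3]].
    exists (sel x y). split; auto. apply pmap_dom; auto.
  - intros x y x' y' Hx Hy Hx' Hy' E.
    destruct (sel_spec x y Hx Hy) as [C1 [X1 Y1]].
    destruct (sel_spec x' y' Hx' Hy') as [C2 [X2 Y2]].
    destruct (HC _ _ C1 C2) as [[L _]|[L _]].
    + rewrite (F_spec (sel x' y') x y), (F_spec (sel x' y') x' y') in E by auto.
      apply (pmap_inj (sel x' y')); auto.
    + rewrite (F_spec (sel x y) x y), (F_spec (sel x y) x' y') in E by auto.
      apply (pmap_inj (sel x y)); auto.
  - intros s Cs. split; simpl.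
    + intros x Hx. exists s; auto.
    + intros x y Hx Hy. symmetry. apply F_spec; auto.
Qed.
End Pairings.

Section PairingExtension.
Variables (A : Type) (i : nat -> A).
Hypothesis i_inj : forall m n, i m = i n -> m = n.
Variable p : pairing A i.

Local Notation D := (pdom A i p).
Local Notation F := (pmap A i p).

(* Given an injection of [D] into its complement, [p] extends to [D] plus the image. *)
Variable psi : {x | D x} -> {x | ~ D x}.
Hypothesis psi_inj : forall x y, psi x = psi y -> x = y.

Definition ext_out (x : A) : A :=
  match excluded_middle_informative (D x) with
  | left Dx => proj1_sig (psi (exist _ x Dx)) | right _ => x end.

Lemma ext_out_spec x : D x -> ~ D (ext_out x).
Proof.
  intros Dx. unfold ext_out. destruct (excluded_middle_informative (D x)); [|contradiction].
  exact (proj2_sig (psi _)).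
Qed.

Lemma ext_out_inj x y : D x -> D y -> ext_out x = ext_out y -> x = y.
Proof.
  intros Dx Dy. unfold ext_out.
  destruct (excluded_middle_informative (D x)); [|contradiction].
  destruct (excluded_middle_informative (D y)); [|contradiction].
  intros E. apply proj1_sig_inj, psi_inj in E. exact (f_equal (@proj1_sig _ _) E).
Qed.

Definition ext_dom (z : A) : Prop := D z \/ exists x, D x /\ ext_out x = z.

Definition ext_back (z : A) : A := epsilon (inhabits (i 0)) (fun x => D x /\ ext_out x = z).

Lemma ext_back_spec z : ext_dom z -> ~ D z -> D (ext_back z) /\ ext_out (ext_back z) = z.
Proof. intros [Dz|Hz] nDz; [contradiction|]. exact (epsilon_spec _ _ Hz). Qed.

(* [ext_code] injects [ext_dom] into [D]: a tag for the side, and the [ext_out]-preimage. *)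
Definition ext_code (z : A) : A :=
  match excluded_middle_informative (D z) with
  | left _ => F (i 0) z | right _ => F (i 1) (ext_back z) end.

Lemma ext_code_dom z : ext_dom z -> D (ext_code z).
Proof.
  intros Hz. unfold ext_code. destruct (excluded_middle_informative (D z)) as [Dz|nDz];
    apply pmap_dom; auto; try apply pdom_nat. apply ext_back_spec; auto.
Qed.

Lemma ext_code_inj z z' : ext_dom z -> ext_dom z' -> ext_code z = ext_code z' -> z = z'.
Proof.
  intros Hz Hz'. unfold ext_code.
  assert (d01 : i 0 <> i 1) by (intros E; apply i_inj in E; discriminate).
  destruct (excluded_middle_informative (D z)) as [Dz|nDz];
  destruct (excluded_middle_informative (D z')) as [Dz'|nDz']; intros E;
    apply pmap_inj in E as [Et E]; try apply pdom_nat; try apply ext_back_spec; auto;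
    try (exfalso; congruence).
  rewrite <- (proj2 (ext_back_spec z Hz nDz)), <- (proj2 (ext_back_spec z' Hz' nDz')), E.
  reflexivity.
Qed.

Definition ext_map (x y : A) : A :=
  match excluded_middle_informative (D x /\ D y) with
  | left _ => F x y | right _ => ext_out (F (ext_code x) (ext_code y)) end.

Lemma ext_map_old x y : D x -> D y -> ext_map x y = F x y.
Proof. intros Dx Dy. unfold ext_map. destruct (excluded_middle_informative _); tauto. Qed.

Lemma ext_map_new x y : ~ (D x /\ D y) -> ext_map x y = ext_out (F (ext_code x) (ext_code y)).
Proof. intros H. unfold ext_map. destruct (excluded_middle_informative _); tauto. Qed.

Lemma ext_map_dom x y : ext_dom x -> ext_dom y -> ext_dom (ext_map x y).
Proof.
  intros Hx Hy. destruct (classic (D x /\ D y)) as [[Dx Dy]|H].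
  - left. rewrite ext_map_old by auto. apply pmap_dom; auto.
  - right. exists (F (ext_code x) (ext_code y)). rewrite ext_map_new by auto.
    split; auto. apply pmap_dom; apply ext_code_dom; auto.
Qed.

Lemma ext_map_inj x y x' y' : ext_dom x -> ext_dom y -> ext_dom x' -> ext_dom y' ->
  ext_map x y = ext_map x' y' -> x = x' /\ y = y'.
Proof.
  intros Hx Hy Hx' Hy' E.
  assert (coded_dom : forall a b, ext_dom a -> ext_dom b -> D (F (ext_code a) (ext_code b))).
  { intros a b Ha Hb. apply pmap_dom; apply ext_code_dom; auto. }
  destruct (classic (D x /\ D y)) as [[Dx Dy]|H];
  destruct (classic (D x' /\ D y')) as [[Dx' Dy']|H'];
    [rewrite (ext_map_old x y), (ext_map_old x' y') in E by auto
    |rewrite (ext_map_old x y), (ext_map_new x' y') in E by auto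
    |rewrite (ext_map_new x y), (ext_map_old x' y') in E by auto
    |rewrite (ext_map_new x y), (ext_map_new x' y') in E by auto].
  - apply pmap_inj in E; auto.
  - exfalso. apply (ext_out_spec _ (coded_dom x' y' Hx' Hy')). rewrite <- E. apply pmap_dom; auto.
  - exfalso. apply (ext_out_spec _ (coded_dom x y Hx Hy)). rewrite E. apply pmap_dom; auto.
  - apply ext_out_inj, pmap_inj in E as [E1 E2]; try apply ext_code_dom; auto.
    split; apply ext_code_inj; auto.
Qed.

Definition ext_pairing : pairing A i :=
  Pairing A i ext_dom ext_map (fun n => or_introl (pdom_nat A i p n)) ext_map_dom ext_map_inj.

Lemma ext_pairing_spec : pairing_le A i p ext_pairing /\ ~ pairing_le A i ext_pairing p.
Proof.
  split; [split|].
  - intros x Dx. left; exact Dx.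
  - intros x y Dx Dy. symmetry. apply ext_map_old; auto.
  - intros [Hle _]. apply (ext_out_spec (i 0) (pdom_nat A i p 0)), Hle.
    right. exists (i 0). split; [apply pdom_nat|reflexivity].
Qed.

End PairingExtension.

Lemma card_square_le A : infinite_type A -> card_le (A * A) A.
Proof.
  intros [i i_inj].
  destruct (zorn_premaximal _ (nat_pairing A i i_inj) (pairing_le A i)) as [p pmax].
  - intros s; split; auto.
  - intros r s t [H1 H2] [H3 H4]; split; auto.
    intros x y Hx Hy. rewrite H2; auto.
  - exact (pairing_chain_ub A i i_inj).
  - set (D := pdom A i p). set (F := pmap A i p).
    assert (small : ~ card_le {x | D x} {x | ~ D x}).
    { intros [psi psi_inj].
      destruct (ext_pairing_spec A i i_inj p psi psi_inj) as [Lpq Nqp]. exact (Nqp (pmax _ Lpq)). }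
    destruct (card_le_total {x | ~ D x} {x | D x}) as [[chi chi_inj]|]; [|contradiction].
    (* [A] injects into [D], tagging elements of [D] by [i 0] and the others by [i 1]. *)
    set (j := fun a => match excluded_middle_informative (D a) with
              | left _ => F (i 0) a | right n => F (i 1) (proj1_sig (chi (exist _ a n))) end).
    assert (jD : forall a, D (j a)).
    { intros a; unfold j; destruct (excluded_middle_informative (D a)); apply pmap_dom;
        auto; try apply pdom_nat. exact (proj2_sig (chi _)). }
    assert (j_inj : forall a b, j a = j b -> a = b).
    { intros a b; unfold j.
      destruct (excluded_middle_informative (D a)) as [Da|Da];
      destruct (excluded_middle_informative (D b)) as [Db|Db]; intros E;
        apply pmap_inj in E as [E1 E2]; try apply pdom_nat; try exact (proj2_sig (chi _)); auto;
        try (apply i_inj in E1; discriminate).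
      apply proj1_sig_inj, chi_inj in E2. exact (f_equal (@proj1_sig _ _) E2). }
    exists (fun ab => F (j (fst ab)) (j (snd ab))).
    intros [a b] [c d] E. simpl in E.
    apply pmap_inj in E as [E1%j_inj E2%j_inj]; try apply jD. congruence.
Qed.

Lemma card_option_le A : infinite_type A -> card_le (option A) A.
Proof.
  intros HA. apply (card_le_trans _ (A * A)); [|apply card_square_le; auto].
  destruct HA as [i i_inj].
  exists (fun o => match o with None => (i 0, i 0) | Some a => (a, i 1) end).
  intros [a|] [b|] E; inversion E; auto; apply i_inj in H1; discriminate.
Qed.

(** * Substructures *)

Section Substructures.
Variable tau : vocab.

Definition fargs (F : fsym tau) := {k : nat | k < farity tau F}.
Definition rargs (R : rsym tau) := {k : nat | k < rarity tau R}.

Definition closed_under {Y} (f : forall F, (fargs F -> Y) -> Y) (P : Y -> Prop) :=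
  forall F xs, (forall k, P (xs k)) -> P (f F xs).

Definition substructure {Y} (f : forall F, (fargs F -> Y) -> Y) (r : forall R, (rargs R -> Y) -> Prop)
  (P : Y -> Prop) (c : closed_under f P) : structure tau :=
  {| car := {y | P y};
     fint := fun F xs => exist _ (f F (fun k => proj1_sig (xs k))) (c F _ (fun k => proj2_sig (xs k)));
     rint := fun R xs => r R (fun k => proj1_sig (xs k)) |}.

Definition ops_agree_on {Y} (f f' : forall F, (fargs F -> Y) -> Y)
  (r r' : forall R, (rargs R -> Y) -> Prop) (P : Y -> Prop) :=
  (forall F xs, (forall k, P (xs k)) -> f F xs = f' F xs) /\
  (forall R xs, (forall k, P (xs k)) -> (r R xs <-> r' R xs)).

Lemma closed_under_iff {Y} f (P P' : Y -> Prop) :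
  closed_under f P -> (forall y, P y <-> P' y) -> closed_under f P'.
Proof. intros c H F xs Hx. apply H, c. intros k; apply H, Hx. Qed.

Lemma closed_under_agree {Y} f f' r r' (P : Y -> Prop) :
  closed_under f P -> ops_agree_on f f' r r' P -> closed_under f' P.
Proof. intros c [A _] F xs H. rewrite <- A; auto. Qed.

Lemma ops_agree_on_refl {Y} f r (P : Y -> Prop) : ops_agree_on f f r r P.
Proof. split; intros; [reflexivity|tauto]. Qed.

Lemma ops_agree_on_sym {Y} f f' r r' (P : Y -> Prop) :
  ops_agree_on f f' r r' P -> ops_agree_on f' f r' r P.
Proof. intros [A B]. split; intros; [symmetry; auto|rewrite B; auto; tauto]. Qed.

Lemma embedding_inj (A B : structure tau) f : is_embedding A B f -> forall x y, f x = f y -> x = y.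
Proof. intros [H _]; exact H. Qed.

Lemma is_iso_id (A : structure tau) : is_iso A A (fun x => x).
Proof. split; [split; [|split]|]; eauto; tauto. Qed.

Lemma is_iso_inv (A B : structure tau) (f : car A -> car B) : is_iso A B f ->
  exists g, is_iso B A g /\ (forall x, g (f x) = x) /\ (forall y, f (g y) = y).
Proof.
  intros [[Hi [Hf Hr]] Hs].
  set (g := fun y => proj1_sig (constructive_indefinite_description _ (Hs y))).
  assert (fg : forall y, f (g y) = y).
  { intros y; unfold g; destruct (constructive_indefinite_description _ (Hs y)); simpl; auto. }
  assert (gf : forall x, g (f x) = x) by (intros x; apply Hi; rewrite fg; reflexivity).
  assert (fg_fun : forall X (ys : X -> car B), (fun k => f (g (ys k))) = ys).
  { intros X ys. apply functional_extensionality; intros k; apply fg. }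
  exists g. split; [|split; auto].
  split; [split; [|split]|].
  - intros x y E. rewrite <- (fg x), <- (fg y), E. reflexivity.
  - intros F ys. apply Hi. rewrite fg, Hf, fg_fun. reflexivity.
  - intros R ys. rewrite Hr, fg_fun. tauto.
  - intros x; exists (f x); auto.
Qed.

Lemma is_iso_card (A B : structure tau) f (C : Type) :
  is_iso A B f -> card_eq (car A) C -> card_eq (car B) C.
Proof.
  intros Hf HA. destruct (is_iso_inv A B f Hf) as [g [Hg _]].
  apply card_le_antisym.
  - apply (card_le_trans _ (car A)); [|apply card_eq_le; auto].
    exists g. apply (embedding_inj _ _ g), Hg.
  - apply (card_le_trans _ (car A)); [apply card_eq_ge; auto|].
    exists f. apply (embedding_inj _ _ f), Hf.
Qed.

Lemma substructure_incl_embedding {Y} f r (P P' : Y -> Prop) c c'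
  (g : car (substructure f r P c) -> car (substructure f r P' c')) :
  (forall x, proj1_sig (g x) = proj1_sig x) ->
  is_embedding (substructure f r P c) (substructure f r P' c') g.
Proof.
  intros Hg.
  assert (Hg_fun : forall X (xs : X -> car (substructure f r P c)),
             (fun k => proj1_sig (g (xs k))) = (fun k => proj1_sig (xs k))).
  { intros X xs. apply functional_extensionality; intros k. apply Hg. }
  split; [|split].
  - intros x y E. apply proj1_sig_inj. rewrite <- Hg, E, Hg. reflexivity.
  - intros F xs. apply proj1_sig_inj. simpl. rewrite Hg, Hg_fun. reflexivity.
  - intros R xs. simpl. rewrite Hg_fun. tauto.
Qed.

Lemma substructure_incl_iso {Y} f r (P P' : Y -> Prop) c c'
  (g : car (substructure f r P c) -> car (substructure f r P' c')) :
  (forall y, P' y -> P y) -> (forall x, proj1_sig (g x) = proj1_sig x) ->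
  is_iso (substructure f r P c) (substructure f r P' c') g.
Proof.
  intros HP Hg. split; [apply substructure_incl_embedding; auto|].
  intros y. exists (exist _ (proj1_sig y) (HP _ (proj2_sig y))).
  apply proj1_sig_inj. rewrite Hg. reflexivity.
Qed.

Lemma substructure_agree_iso {Y} f f' r r' (P : Y -> Prop) c c' :
  ops_agree_on f f' r r' P -> is_iso (substructure f r P c) (substructure f' r' P c') (fun x => x).
Proof.
  intros [Hf Hr]. split; [split; [|split]|].
  - auto.
  - intros F xs. apply proj1_sig_inj. simpl. apply Hf. intros k; exact (proj2_sig (xs k)).
  - intros R xs. simpl. apply Hr. intros k; exact (proj2_sig (xs k)).
  - intros y; exists y; auto.
Qed.

Lemma image_substructure_iso (A E : structure tau) (k : car A -> car E) (Q : car E -> Prop)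
  (c : closed_under (fint E) Q) (HQ : forall y, Q y <-> exists x, k x = y) :
  is_embedding A E k ->
  is_iso A (substructure (fint E) (rint E) Q c) (fun x => exist Q (k x) (proj2 (HQ _) (ex_intro _ x eq_refl))).
Proof.
  intros [Hi [Hf Hr]]. split; [split; [|split]|].
  - intros x y E'. apply Hi. exact (f_equal (@proj1_sig _ _) E').
  - intros F xs. apply proj1_sig_inj. simpl. apply Hf.
  - intros R xs. simpl. apply Hr.
  - intros y. destruct (proj1 (HQ _) (proj2_sig y)) as [x Hx]. exists x. apply proj1_sig_inj. exact Hx.
Qed.

Lemma chain_common_index {Y I} (lt : I -> I -> Prop)
  (tot : forall i j, lt i j \/ i = j \/ lt j i) (D : I -> Prop) (Dne : exists i, D i)
  (Q : I -> Y -> Prop) (mono : forall i j, lt i j -> forall y, Q i y -> Q j y)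
  (n : nat) (xs : {k : nat | k < n} -> Y) :
  (forall k, exists i, D i /\ Q i (xs k)) -> exists i, D i /\ forall k, Q i (xs k).
Proof.
  intros H.
  assert (upto : forall m, m <= n -> exists i, D i /\ forall k, proj1_sig k < m -> Q i (xs k)).
  { induction m as [|m IH]; intros Hm.
    - destruct Dne as [i Hi]. exists i; split; auto. intros k Hk; inversion Hk.
    - destruct (IH ltac:(lia)) as [i [Di Hi]].
      assert (Hmn : m < n) by exact Hm.
      destruct (H (exist _ m Hmn)) as [i' [Di' Hi']].
      assert (Hk : forall k : {k : nat | k < n}, proj1_sig k < S m ->
                 proj1_sig k < m \/ k = exist _ m Hmn).
      { intros k Hk. destruct (Nat.eq_dec (proj1_sig k) m) as [e|e].
        - right. apply proj1_sig_inj. exact e.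
        - left. lia. }
      destruct (tot i i') as [L|[<-|L]]; [exists i'|exists i|exists i]; split; auto;
        intros k Hk'; destruct (Hk k Hk') as [h| ->]; eauto. }
  destruct (upto n (le_n n)) as [i [Di Hi]]. exists i; split; auto.
  intros k; apply Hi; exact (proj2_sig k).
Qed.

Lemma closed_under_chain_union {Y I} (lt : I -> I -> Prop)
  (tot : forall i j, lt i j \/ i = j \/ lt j i) (D : I -> Prop) (Dne : exists i, D i)
  (Q : I -> Y -> Prop) (mono : forall i j, lt i j -> forall y, Q i y -> Q j y)
  f (cQ : forall i, closed_under f (Q i)) :
  closed_under f (fun y => exists i, D i /\ Q i y).
Proof.
  intros F xs H. destruct (chain_common_index lt tot D Dne Q mono _ xs H) as [i [Di Hi]].
  exists i; split; auto. apply cQ; auto.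
Qed.

End Substructures.

Arguments closed_under {tau Y} f P.
Arguments substructure {tau Y} f r P c.
Arguments ops_agree_on {tau Y} f f' r r' P.

Lemma restrict_well_order {I : Type} (lt : I -> I -> Prop) (P : I -> Prop) :
  well_order lt -> well_order (fun a b : {j | P j} => lt (proj1_sig a) (proj1_sig b)).
Proof.
  intros [wf [tr tot]]. split; [|split].
  - apply (wf_inverse_image _ _ lt (@proj1_sig _ _) wf).
  - intros a b c; apply tr.
  - intros a b. destruct (tot (proj1_sig a) (proj1_sig b)) as [h|[h|h]]; auto.
    right; left; apply proj1_sig_inj; exact h.
Qed.

Lemma is_limit_restrict {I : Type} (lt : I -> I -> Prop) (P : I -> Prop)
  (P_down : forall k j, lt k j -> P j -> P k) (j : {j | P j}) :
  is_limit (fun a b : {j | P j} => lt (proj1_sig a) (proj1_sig b)) j -> is_limit lt (proj1_sig j).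
Proof.
  intros [[a La] lj]. split; [exists (proj1_sig a); exact La|].
  intros k Lk. destruct (lj (exist _ k (P_down _ _ Lk (proj2_sig j))) Lk) as [b [L1 L2]].
  exists (proj1_sig b); auto.
Qed.

Section AECFacts.
Variables (tau : vocab) (K : AEC tau).

Lemma leK_ext (A B : structure tau) (f g : car A -> car B) :
  leK K A B f -> (forall x, f x = g x) -> leK K A B g.
Proof. intros H E. replace g with f; [exact H|]. apply functional_extensionality; exact E. Qed.

Lemma leK_refl (A : structure tau) : inK K A -> leK K A A (fun x => x).
Proof. intros HA. apply leK_iso; [exact HA|apply is_iso_id]. Qed.

Lemma leK_iso_inv (A B : structure tau) (f : car A -> car B) : inK K B -> is_iso A B f ->
  exists g, leK K B A g /\ (forall x, g (f x) = x) /\ (forall y, f (g y) = y).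
Proof.
  intros HB Hf. destruct (is_iso_inv tau A B f Hf) as [g [Hg [H1 H2]]].
  exists g; split; auto. apply leK_iso; auto.
Qed.

Lemma image_substructure_leK (A E N : structure tau) (k : car A -> car E) (emb : is_embedding A E k)
  (inKA : inK K A) (Q : car E -> Prop) (c : closed_under (fint E) Q)
  (HQ : forall y, Q y <-> exists x, k x = y) (psi : car E -> car N) :
  leK K A N (fun x => psi (k x)) ->
  leK K (substructure (fint E) (rint E) Q c) N (fun y => psi (proj1_sig y)).
Proof.
  intros Hl.
  assert (iso := image_substructure_iso tau A E k Q c HQ emb).
  destruct (leK_iso_inv _ _ _ (inK_iso tau K _ _ _ inKA iso) iso) as [g [Lg [_ Hjg]]].
  apply (leK_ext _ _ (fun y => psi (k (g y)))).
  - apply (leK_comp tau K _ _ _ g (fun x => psi (k x))); auto.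
  - intros y. f_equal. rewrite <- (Hjg y) at 2. reflexivity.
Qed.

End AECFacts.

Definition incl_leK {tau} (K : AEC tau) {Y} f r f' r' (P P' : Y -> Prop)
  (c : closed_under f P) (c' : closed_under f' P') : Prop :=
  exists g : car (substructure f r P c) -> car (substructure f' r' P' c'),
    leK K _ _ g /\ forall x, proj1_sig (g x) = proj1_sig x.

Section Copies.
Variable tau : vocab.

Lemma copy_along_injection (N : structure tau) {Y} (y0 : Y) (t : car N -> Y)
  (t_inj : forall a b, t a = t b -> a = b) :
  exists f r (c : closed_under f (fun z => exists y, t y = z)),
    (forall F ys, f F (fun k => t (ys k)) = t (fint N F ys)) /\
    (forall R ys, r R (fun k => t (ys k)) <-> rint N R ys).
Proof.
  set (P := fun z => exists y, t y = z).
  set (pre := fun X (zs : X -> Y) (H : forall k, P (zs k)) k =>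
                proj1_sig (constructive_indefinite_description _ (H k))).
  assert (pre_t : forall X (ys : X -> car N) H, pre X (fun k => t (ys k)) H = ys).
  { intros X ys H. apply functional_extensionality; intros k. unfold pre.
    destruct (constructive_indefinite_description _ (H k)) as [y Hy]. simpl. apply t_inj, Hy. }
  set (f := fun F (zs : fargs tau F -> Y) => match excluded_middle_informative (forall k, P (zs k)) with
       | left H => t (fint N F (pre _ zs H)) | right _ => y0 end).
  set (r := fun R (zs : rargs tau R -> Y) => match excluded_middle_informative (forall k, P (zs k)) with
       | left H => rint N R (pre _ zs H) | right _ => False end).
  assert (c : closed_under f P).
  { intros F zs H. unfold f. destruct (excluded_middle_informative _); [eexists; reflexivity|contradiction]. }
  assert (in_P : forall X (ys : X -> car N) k, P (t (ys k))) by (intros X ys k; exists (ys k); reflexivity).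
  exists f, r, c. split.
  - intros F ys. unfold f. destruct (excluded_middle_informative _) as [H|H].
    + rewrite pre_t. reflexivity.
    + destruct (H (in_P _ ys)).
  - intros R ys. unfold r. destruct (excluded_middle_informative _) as [H|H].
    + rewrite pre_t. tauto.
    + destruct (H (in_P _ ys)).
Qed.

Lemma copy_iso (N : structure tau) {Y} (t : car N -> Y) (t_inj : forall a b, t a = t b -> a = b)
  f r (c : closed_under f (fun z => exists y, t y = z))
  (hf : forall F ys, f F (fun k => t (ys k)) = t (fint N F ys))
  (hr : forall R ys, r R (fun k => t (ys k)) <-> rint N R ys) :
  is_iso N (substructure f r _ c) (fun y => exist _ (t y) (ex_intro _ y eq_refl)).
Proof.
  split; [split; [|split]|].
  - intros y y' E. apply t_inj. exact (f_equal (@proj1_sig _ _) E).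
  - intros F ys. apply proj1_sig_inj. simpl. rewrite hf. reflexivity.
  - intros R ys. simpl. rewrite hr. tauto.
  - intros [z [y Hy]]. exists y. apply proj1_sig_inj. exact Hy.
Qed.

End Copies.

Lemma extend_injection {C D N} (P0 : C * D -> Prop) (iota : {x | P0 x} -> N)
  (iota_inj : forall a b, iota a = iota b -> a = b) (c : N -> D) (c_inj : forall a b, c a = c b -> a = b)
  (col : C) (fresh : forall x, P0 x -> fst x <> col) :
  exists t : N -> C * D, (forall y y', t y = t y' -> y = y') /\
    (forall x, t (iota x) = proj1_sig x) /\ (forall y, (exists x, iota x = y) \/ fst (t y) = col).
Proof.
  set (t := fun y => match excluded_middle_informative (exists x, iota x = y) with
       | left H => proj1_sig (proj1_sig (constructive_indefinite_description _ H))
       | right _ => (col, c y) end).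
  assert (t_iota : forall x, t (iota x) = proj1_sig x).
  { intros x. unfold t. destruct (excluded_middle_informative _) as [H|H]; [|exfalso; eauto].
    destruct (constructive_indefinite_description _ H) as [x' Hx']. simpl.
    apply iota_inj in Hx'. subst; reflexivity. }
  assert (t_new : forall y, ~ (exists x, iota x = y) -> t y = (col, c y)).
  { intros y H. unfold t. destruct (excluded_middle_informative _); [contradiction|reflexivity]. }
  exists t. split; [|split; [exact t_iota|]].
  - intros y y' E.
    destruct (classic (exists x, iota x = y)) as [[x <-]|H1];
    destruct (classic (exists x, iota x = y')) as [[x' <-]|H2].
    + rewrite !t_iota in E. f_equal. apply proj1_sig_inj, E.
    + rewrite t_iota, (t_new _ H2) in E. destruct (fresh _ (proj2_sig x)). rewrite E; reflexivity.
    + rewrite t_iota, (t_new _ H1) in E. destruct (fresh _ (proj2_sig x')). rewrite <- E; reflexivity.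
    + rewrite (t_new _ H1), (t_new _ H2) in E. injection E as E. apply c_inj, E.
  - intros y. destruct (classic (exists x, iota x = y)) as [H|H]; [left; exact H|right].
    rewrite t_new; auto.
Qed.

Lemma copy_extends {tau} (K : AEC tau) {Y} f0 r0 (P0 : Y -> Prop) (c0 : closed_under f0 P0)
  (N : structure tau) (f1 : car (substructure f0 r0 P0 c0) -> car N)
  (f1_leK : leK K _ N f1) (inKN : inK K N) (t : car N -> Y) (t_inj : forall a b, t a = t b -> a = b)
  (t_f1 : forall x, t (f1 x) = proj1_sig x)
  f r (c : closed_under f (fun z => exists y, t y = z))
  (hf : forall F ys, f F (fun k => t (ys k)) = t (fint N F ys))
  (hr : forall R ys, r R (fun k => t (ys k)) <-> rint N R ys) :
  (forall x, P0 x -> exists y, t y = x) /\ ops_agree_on f0 f r0 r P0 /\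
  incl_leK K f0 r0 f r P0 (fun z => exists y, t y = z) c0 c.
Proof.
  destruct (leK_emb tau K _ _ _ f1_leK) as [_ [Hf1 Hr1]].
  assert (t_f1_fun : forall X (zs : X -> Y) (Hz : forall k, P0 (zs k)),
             (fun k => t (f1 (exist P0 (zs k) (Hz k)))) = zs).
  { intros X zs Hz. apply functional_extensionality; intros k. rewrite t_f1. reflexivity. }
  split; [|split; [split|]].
  - intros x Hx. exists (f1 (exist _ x Hx)). apply t_f1.
  - intros F zs Hz.
    change (proj1_sig (fint (substructure f0 r0 P0 c0) F (fun k => exist P0 (zs k) (Hz k))) = f F zs).
    rewrite <- t_f1, Hf1, <- hf, t_f1_fun. reflexivity.
  - intros R zs Hz.
    change (rint (substructure f0 r0 P0 c0) R (fun k => exist P0 (zs k) (Hz k)) <-> r R zs).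
    rewrite Hr1, <- hr, t_f1_fun. reflexivity.
  - exists (fun x => exist _ (t (f1 x)) (ex_intro _ _ eq_refl)). split.
    + apply (leK_comp tau K _ N (substructure f r _ c) f1
               (fun y => exist (fun z => exists y, t y = z) (t y) (ex_intro _ y eq_refl))); auto.
      apply leK_iso; [exact inKN|apply copy_iso; auto].
    + intros x. apply t_f1.
Qed.

(** * Well orders, sequences and successor cardinals *)

Section WellOrders.
Variables (W : Type) (lt : W -> W -> Prop).
Hypothesis wo : well_order lt.

Lemma wo_trans a b c : lt a b -> lt b c -> lt a c.
Proof. exact (proj1 (proj2 wo) a b c). Qed.

Lemma wo_total a b : lt a b \/ a = b \/ lt b a.
Proof. exact (proj2 (proj2 wo) a b). Qed.

Lemma wo_irrefl a : ~ lt a a.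
Proof. induction a as [a IH] using (well_founded_ind (proj1 wo)). intros L. exact (IH a L L). Qed.

Lemma wo_asym a b : lt a b -> ~ lt b a.
Proof. intros L1 L2. exact (wo_irrefl a (wo_trans _ _ _ L1 L2)). Qed.

Lemma wo_least (w : W) : exists m, forall b, ~ lt b m.
Proof.
  induction w as [w IH] using (well_founded_ind (proj1 wo)).
  destruct (classic (exists b, lt b w)) as [[b L]|N]; [exact (IH b L)|].
  exists w. intros b L. apply N. eauto.
Qed.

Lemma initseg_below (a b : wseq lt) x : initseg a b -> lt x (len a) -> lt x (len b).
Proof. intros [[E|L] _] p; [rewrite <- E; exact p|exact (wo_trans _ _ _ p L)]. Qed.

Lemma wseq_ext (a b : wseq lt) : len a = len b -> (forall x p q, ent a x p = ent b x q) -> a = b.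
Proof.
  destruct a as [la ea], b as [lb eb]. simpl. intros E. subst lb. intros H. f_equal.
  apply functional_extensionality_dep; intros x. apply functional_extensionality_dep; intros p.
  apply H.
Qed.

Lemma initseg_trans (a b c : wseq lt) : initseg a b -> initseg b c -> initseg a c.
Proof.
  intros [L1 E1] [L2 E2]. split.
  - destruct L1 as [L1|L1]; destruct L2 as [L2|L2].
    + left; congruence.
    + right; rewrite L1; exact L2.
    + right; rewrite <- L2; exact L1.
    + right; exact (wo_trans _ _ _ L1 L2).
  - intros x p q. rewrite (E1 x p (initseg_below a b x (conj L1 E1) p)). apply E2.
Qed.

Lemma initseg_of_common (a b c : wseq lt) : initseg a c -> initseg b c ->
  len a = len b \/ lt (len a) (len b) -> initseg a b.
Proof.
  intros Ha Hb L. split; [exact L|]. intros x p q.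
  rewrite (proj2 Ha x p (initseg_below _ _ x Ha p)), (proj2 Hb x q (initseg_below _ _ x Ha p)).
  reflexivity.
Qed.

Lemma initseg_total (a b c : wseq lt) : initseg a c -> initseg b c -> initseg a b \/ initseg b a.
Proof.
  intros Ha Hb. destruct (wo_total (len a) (len b)) as [L|[L|L]];
    [left|left|right]; apply (initseg_of_common _ _ c); auto.
Qed.

Lemma initseg_len_inj (a b c : wseq lt) : initseg a c -> initseg b c -> len a = len b -> a = b.
Proof.
  intros Ha Hb E. apply wseq_ext; [exact E|]. intros x p q.
  exact (proj2 (initseg_of_common a b c Ha Hb (or_introl E)) x p q).
Qed.

Lemma initseg_chain_well_order (B : wseq lt -> Prop) (eta : wseq lt) :
  (forall rho, B rho -> initseg rho eta) ->
  well_order (fun a b : {rho | B rho} => lt (len (proj1_sig a)) (len (proj1_sig b))).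
Proof.
  intros HB. split; [|split].
  - apply (wf_inverse_image _ _ lt (fun a : {rho | B rho} => len (proj1_sig a)) (proj1 wo)).
  - intros a b c; apply wo_trans.
  - intros a b. destruct (wo_total (len (proj1_sig a)) (len (proj1_sig b))) as [L|[L|L]]; auto.
    right; left. apply proj1_sig_inj, (initseg_len_inj _ _ eta); auto; apply HB, proj2_sig.
Qed.

Definition wseq_root (m : W) : wseq lt := {| len := m; ent := fun b _ => b |}.

Section Root.
Variable m : W.
Hypothesis m_least : forall b, ~ lt b m.

Lemma root_initseg (eta : wseq lt) : initseg (wseq_root m) eta.
Proof.
  split.
  - simpl. destruct (wo_total m (len eta)) as [L|[E|L]]; auto. destruct (m_least _ L).
  - intros x p q. destruct (m_least x p).
Qed.

Lemma initseg_root (rho : wseq lt) : initseg rho (wseq_root m) -> rho = wseq_root m.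
Proof.
  intros [[L|L] _]; [|destruct (m_least _ L)].
  apply wseq_ext; [exact L|]. intros x p q. destruct (m_least x q).
Qed.

End Root.

End WellOrders.

Section SuccessorCardinal.
Variables (Lam W : Type) (lt : W -> W -> Prop).
Hypotheses (Lam_inf : infinite_type Lam) (hW : is_succ_card_ordinal Lam lt).

Lemma succ_card_infinite : infinite_type W.
Proof.
  destruct (card_le_total nat W) as [H|H]; auto.
  destruct (proj2 (proj2 hW)). exact (card_le_trans _ _ _ H Lam_inf).
Qed.

(* If [g] were the largest element, [W] would inject into [option {b | b < g}], of size [|Lam|]. *)
Lemma succ_card_no_max g : exists d, lt g d.
Proof.
  apply NNPP. intros Hn. apply (proj2 (proj2 hW)).
  apply (card_le_trans _ (option Lam)); [|apply card_option_le; auto].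
  destruct (proj1 (proj2 hW) g) as [si si_inj].
  exists (fun d => match excluded_middle_informative (lt d g) with
                   | left p => Some (si (exist _ d p)) | right _ => None end).
  intros a b E.
  destruct (excluded_middle_informative (lt a g)) as [pa|pa];
  destruct (excluded_middle_informative (lt b g)) as [pb|pb]; try discriminate.
  - injection E as E. apply si_inj in E. exact (f_equal (@proj1_sig _ _) E).
  - destruct (wo_total W lt (proj1 hW) a g) as [L|[->|L]]; [contradiction| |exfalso; eauto].
    destruct (wo_total W lt (proj1 hW) b g) as [L|[->|L]]; [contradiction|reflexivity|exfalso; eauto].
Qed.

End SuccessorCardinal.

Lemma tree_card_le {W} {lt : W -> W -> Prop} (T : wseq lt -> Prop) :
  levels_le T -> card_le (W * W) W -> card_le {eta | T eta} W.
Proof.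
  intros hlev WW. apply (card_le_trans _ (W * W)); [|exact WW].
  set (lev := fun a => proj1_sig (constructive_indefinite_description _ (hlev a))).
  assert (lev_inj : forall a x y, lev a x = lev a y -> x = y).
  { intros a. exact (proj2_sig (constructive_indefinite_description _ (hlev a))). }
  (* [index a eta] is the position of [eta] within level [a]; junk off that level. *)
  set (index := fun a eta => match excluded_middle_informative (T eta /\ len eta = a) with
                             | left p => lev a (exist _ eta p) | right _ => a end).
  exists (fun x => (len (proj1_sig x), index (len (proj1_sig x)) (proj1_sig x))).
  intros [x Tx] [y Ty] E. simpl in E. injection E as E1 E2.
  rewrite <- E1 in E2. unfold index in E2.
  destruct (excluded_middle_informative (T x /\ len x = len x)) as [p|p]; [|tauto].
  destruct (excluded_middle_informative (T y /\ len y = len x)) as [q|q]; [|destruct q; auto].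
  apply lev_inj in E2. apply proj1_sig_inj. exact (f_equal (@proj1_sig _ _) E2).
Qed.

Lemma card_le_enum {A B} (P : A -> Prop) (a0 : A) :
  card_le {x | P x} B -> exists e : B -> A, forall x, P x -> exists b, e b = x.
Proof.
  intros [j j_inj].
  exists (fun b => epsilon (inhabits a0) (fun x => exists p : P x, j (exist _ x p) = b)).
  intros x p. exists (j (exist _ x p)).
  destruct (epsilon_spec (inhabits a0) (fun x' => exists p', j (exist _ x' p') = j (exist _ x p))
              (ex_intro _ x (ex_intro _ p eq_refl))) as [p' E].
  exact (f_equal (@proj1_sig _ _) (j_inj _ _ E)).
Qed.

(** * Unions of chains *)

Section ChainUnion.
Variables (tau : vocab) (K : AEC tau) (Y : Type).
Variables (f : forall F, (fargs tau F -> Y) -> Y) (r : forall R, (rargs tau R -> Y) -> Prop).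
Variables (I : Type) (lt : I -> I -> Prop) (Q : I -> Y -> Prop) (cQ : forall i, closed_under f (Q i)).
Hypotheses (wo : well_order lt) (inh : inhabited I) (Q_ne : forall i, exists y, Q i y)
  (Q_mono : forall i j, lt i j -> forall y, Q i y -> Q j y).
Variables (Qu : Y -> Prop) (cu : closed_under f Qu).
Hypothesis Qu_union : forall y, Qu y <-> exists i, Q i y.

Local Notation stage i := (substructure f r (Q i) (cQ i)).
Local Notation union := (substructure f r Qu cu).

Hypotheses (stage_inK : forall i, inK K (stage i))
  (stage_leK : forall i j, lt i j -> incl_leK K f r f r (Q i) (Q j) (cQ i) (cQ j))
  (Q_cont : forall j, is_limit lt j -> forall y, Q j y -> exists i, lt i j /\ Q i y).

(* Off the chain order the transition maps are junk; only [lt i j] is ever used. *)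
Definition chain_map (i j : I) (x : {y | Q i y}) : {y | Q j y} :=
  match excluded_middle_informative (Q j (proj1_sig x)) with
  | left p => exist (Q j) (proj1_sig x) p
  | right _ => epsilon (match Q_ne j with ex_intro y Hy => inhabits (exist _ y Hy) end)
                       (fun _ => True)
  end.

Lemma chain_map_val i j x : lt i j -> proj1_sig (chain_map i j x) = proj1_sig x.
Proof.
  intros L. unfold chain_map.
  destruct (excluded_middle_informative _) as [|n]; [reflexivity|].
  exfalso. apply n, (Q_mono i j L), proj2_sig.
Qed.

Definition chain_incl (i : I) (x : {y | Q i y}) : {y | Qu y} :=
  exist Qu (proj1_sig x) (proj2 (Qu_union _) (ex_intro _ i (proj2_sig x))).

Lemma substructure_chain_union : inK K union /\
  (forall i, incl_leK K f r f r (Q i) Qu (cQ i) cu) /\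
  (forall (N : structure tau) (phi : Y -> car N),
     (forall i, leK K (stage i) N (fun x => phi (proj1_sig x))) ->
     leK K union N (fun x => phi (proj1_sig x))).
Proof.
  destruct wo as [_ [tr _]].
  assert (map_leK : forall i j, lt i j -> leK K (stage i) (stage j) (chain_map i j)).
  { intros i j L. destruct (stage_leK i j L) as [g [Hg Hv]]. apply (leK_ext tau K _ _ g); auto.
    intros x. apply proj1_sig_inj. rewrite Hv, chain_map_val; auto. }
  assert (map_comp : forall i j k, lt i j -> lt j k ->
            forall x, chain_map j k (chain_map i j x) = chain_map i k x).
  { intros i j k L1 L2 x. apply proj1_sig_inj. rewrite !chain_map_val; eauto. }
  assert (continuous : forall j, is_limit lt j ->
      union_cocone lt (fun i => lt i j) (fun i => stage i) chain_map (stage j) (fun i => chain_map i j)).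
  { intros j Lj. split; [|split].
    - intros i L. apply (leK_emb tau K), map_leK, L.
    - intros i i' L1 L2 L3 x. apply map_comp; auto.
    - intros y. destruct (Q_cont j Lj (proj1_sig y) (proj2_sig y)) as [i [L Hi]].
      exists i. split; auto. exists (exist _ (proj1_sig y) Hi). apply proj1_sig_inj.
      rewrite chain_map_val; auto. }
  assert (cocone : union_cocone lt (fun _ => True) (fun i => stage i) chain_map union chain_incl).
  { split; [|split].
    - intros i _. apply substructure_incl_embedding. reflexivity.
    - intros i j _ _ L x. apply proj1_sig_inj. apply chain_map_val; auto.
    - intros y. destruct (proj1 (Qu_union _) (proj2_sig y)) as [i Hi].
      exists i; split; auto. exists (exist _ _ Hi). apply proj1_sig_inj. reflexivity. }
  destruct (leK_chain tau K I lt wo inh (fun i => stage i) chain_map map_leK stage_inK map_comp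
              continuous union chain_incl cocone) as [H1 [H2 H3]].
  split; [exact H1|split].
  - intros i. exists (chain_incl i). split; [exact (H2 i)|intros x; reflexivity].
  - intros N phi Hphi. apply (H3 N (fun i x => phi (proj1_sig x))); auto.
    intros i j L x. rewrite chain_map_val; auto.
Qed.

End ChainUnion.

Section DiscontinuousChainUnion.
Variables (tau : vocab) (K : AEC tau) (Y : Type).
Variables (f : forall F, (fargs tau F -> Y) -> Y) (r : forall R, (rargs tau R -> Y) -> Prop).
Variables (I : Type) (lt : I -> I -> Prop) (Q : I -> Y -> Prop) (cQ : forall i, closed_under f (Q i)).
Hypotheses (wo : well_order lt) (inh : inhabited I) (Q_ne : forall i, exists y, Q i y)
  (Q_mono : forall i j, lt i j -> forall y, Q i y -> Q j y).
Variables (Qu : Y -> Prop) (cu : closed_under f Qu).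
Hypothesis Qu_union : forall y, Qu y <-> exists i, Q i y.

Local Notation stage i := (substructure f r (Q i) (cQ i)).
Local Notation union := (substructure f r Qu cu).

Variables (N : structure tau) (phi : Y -> car N).
Hypothesis stage_leK_N : forall i, leK K (stage i) N (fun x => phi (proj1_sig x)).

Lemma incl_leK_of_cocone P P' c c' : leK K (substructure f r P c) N (fun x => phi (proj1_sig x)) ->
  leK K (substructure f r P' c') N (fun x => phi (proj1_sig x)) -> (forall y, P y -> P' y) ->
  incl_leK K f r f r P P' c c'.
Proof.
  intros L L' HP. exists (fun x => exist _ (proj1_sig x) (HP _ (proj2_sig x))). split; [|reflexivity].
  apply (leK_coh tau K _ _ N _ _ _ L L'). reflexivity.
Qed.

Lemma same_substructure_leK P P' c c' : (forall y, P' y <-> P y) ->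
  leK K (substructure f r P c) N (fun x => phi (proj1_sig x)) ->
  leK K (substructure f r P' c') N (fun x => phi (proj1_sig x)).
Proof.
  intros HP L.
  assert (iso : is_iso (substructure f r P c) (substructure f r P' c')
                  (fun x => exist _ (proj1_sig x) (proj2 (HP _) (proj2_sig x)))).
  { apply substructure_incl_iso; [apply HP|reflexivity]. }
  assert (iso' : is_iso (substructure f r P' c') (substructure f r P c)
                   (fun x => exist _ (proj1_sig x) (proj1 (HP _) (proj2_sig x)))).
  { apply substructure_incl_iso; [apply HP|reflexivity]. }
  assert (inKP : inK K (substructure f r P c)) by exact (proj1 (leK_inK tau K _ _ _ L)).
  exact (leK_comp tau K _ _ N _ _ (leK_iso tau K _ _ _ (inK_iso tau K _ _ _ inKP iso) iso') L).
Qed.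

(* The continuous chain with the same union: at limits, replace [Q i] by the union of the [Q j], [j < i]. *)
Definition smoothed (i : I) (y : Y) : Prop :=
  (is_limit lt i /\ exists j, lt j i /\ Q j y) \/ (~ is_limit lt i /\ Q i y).

Lemma smoothed_le i y : smoothed i y -> exists j, (lt j i \/ j = i) /\ Q j y.
Proof. intros [[_ [j [L H]]]|[_ H]]; eauto. Qed.

Lemma smoothed_of_lt k k' y : lt k k' -> Q k y -> smoothed k' y.
Proof.
  intros L H. destruct (classic (is_limit lt k')) as [l|l].
  - left; split; eauto.
  - right; split; auto. apply (Q_mono k k' L); auto.
Qed.

Lemma smoothed_mono i j y : lt i j -> smoothed i y -> smoothed j y.
Proof.
  destruct wo as [_ [tr _]].
  intros L H. destruct (smoothed_le i y H) as [k [[L'|<-] Hk]]; apply (smoothed_of_lt k j y); eauto.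
Qed.

Lemma smoothed_ne i : exists y, smoothed i y.
Proof.
  destruct (classic (is_limit lt i)) as [l|l].
  - destruct l as [[j L] l']. destruct (Q_ne j) as [y Hy]. exists y. left; split; [split; eauto|eauto].
  - destruct (Q_ne i) as [y Hy]. exists y; right; auto.
Qed.

Lemma smoothed_limit_iff i : is_limit lt i -> forall y, smoothed i y <-> exists j, lt j i /\ Q j y.
Proof. intros l y. split; [intros [[_ h]|[h _]]; [exact h|contradiction]|intros h; left; auto]. Qed.

Lemma smoothed_succ_iff i : ~ is_limit lt i -> forall y, smoothed i y <-> Q i y.
Proof. intros l y. split; [intros [[h _]|[_ h]]; [contradiction|exact h]|intros h; right; auto]. Qed.

Lemma smoothed_cont j : is_limit lt j -> forall y, smoothed j y -> exists k, lt k j /\ smoothed k y.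
Proof.
  intros l y Hy. destruct (proj1 (smoothed_limit_iff j l y) Hy) as [k [Lk Hk]].
  destruct (proj2 l k Lk) as [k' [L1 L2]]. exists k'. split; [exact L2|].
  apply (smoothed_of_lt k k'); auto.
Qed.

Lemma smoothed_closed i : closed_under f (smoothed i).
Proof.
  destruct wo as [wf [tr tot]].
  destruct (classic (is_limit lt i)) as [l|l].
  - apply (closed_under_iff tau f (fun y => exists j, lt j i /\ Q j y)).
    + apply (closed_under_chain_union tau lt tot (fun j => lt j i)); auto. apply l.
    + intros y. symmetry. apply smoothed_limit_iff, l.
  - apply (closed_under_iff tau f (Q i)); auto.
    intros y. symmetry. apply smoothed_succ_iff, l.
Qed.

Local Notation smoothed_stage i := (substructure f r (smoothed i) (smoothed_closed i)).

Lemma smoothed_stage_leK i : leK K (smoothed_stage i) N (fun x => phi (proj1_sig x)).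
Proof.
  destruct wo as [wf [tr tot]] eqn:Ewo.
  induction i as [i IH] using (well_founded_ind wf).
  destruct (classic (is_limit lt i)) as [l|l].
  - set (lt' := fun a b : {j | lt j i} => lt (proj1_sig a) (proj1_sig b)).
    assert (inh' : inhabited {j | lt j i}).
    { destruct l as [[j L] _]. exact (inhabits (exist _ j L)). }
    destruct (substructure_chain_union tau K Y f r {j | lt j i} lt' (fun j => smoothed (proj1_sig j))
       (fun j => smoothed_closed (proj1_sig j)) (restrict_well_order lt _ wo) inh'
       (fun j => smoothed_ne (proj1_sig j)) (fun a b L y => smoothed_mono _ _ y L)
       (smoothed i) (smoothed_closed i)) as [_ [_ H3]].
    + intros y. rewrite (smoothed_limit_iff i l). split.
      * intros [k [Lk Hk]]. destruct (proj2 l k Lk) as [k' [L1 L2]].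
        exists (exist _ k' L2). apply (smoothed_of_lt k k'); auto.
      * intros [j Hj]. destruct (smoothed_le _ _ Hj) as [k [Lk Hk]].
        exists k; split; auto. destruct Lk as [Lk| ->]; [exact (tr _ _ _ Lk (proj2_sig j))|exact (proj2_sig j)].
    + intros j. exact (proj1 (leK_inK tau K _ _ _ (IH _ (proj2_sig j)))).
    + intros a b L. apply incl_leK_of_cocone; [apply IH, proj2_sig|apply IH, proj2_sig|].
      intros y. apply smoothed_mono, L.
    + intros j lj y Hy.
      assert (lj' := is_limit_restrict lt (fun j => lt j i) (fun k j L Lj => tr _ _ _ L Lj) j lj).
      destruct (smoothed_cont _ lj' y Hy) as [k [Lk Hk]].
      exists (exist _ k (tr _ _ _ Lk (proj2_sig j))). auto.
    + apply H3. intros j. apply IH, proj2_sig.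
  - apply (same_substructure_leK (Q i) _ (cQ i)); [apply smoothed_succ_iff, l|apply stage_leK_N].
Qed.

Lemma chain_union_leK : inK K union /\ leK K union N (fun x => phi (proj1_sig x)).
Proof.
  destruct wo as [wf [tr tot]].
  cut (leK K union N (fun x => phi (proj1_sig x))).
  { intros L. split; [exact (proj1 (leK_inK tau K _ _ _ L))|exact L]. }
  destruct (classic (exists m, forall i, ~ lt m i)) as [[m Hm]|Hnm].
  - apply (same_substructure_leK (Q m) _ (cQ m)); [|apply stage_leK_N].
    intros y. rewrite Qu_union. split; [|eauto].
    intros [i Hi]. destruct (tot i m) as [L|[<-|L]]; [apply (Q_mono i m L); auto|auto|].
    destruct (Hm i L).
  - destruct (substructure_chain_union tau K Y f r I lt smoothed smoothed_closed wo inh smoothed_ne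
       (fun a b L y => smoothed_mono a b y L) Qu cu) as [_ [_ H3]].
    + intros z. rewrite Qu_union. split.
      * intros [i Hi].
        destruct (not_all_not_ex _ _ (fun h => Hnm (ex_intro _ i h))) as [j Lj].
        exists j. apply (smoothed_of_lt i j); auto.
      * intros [j Hj]. destruct (smoothed_le _ _ Hj) as [k [_ Hk]]. eauto.
    + intros i. exact (proj1 (leK_inK tau K _ _ _ (smoothed_stage_leK i))).
    + intros a b L. apply incl_leK_of_cocone; try apply smoothed_stage_leK.
      intros y. apply smoothed_mono, L.
    + exact smoothed_cont.
    + apply H3, smoothed_stage_leK.
Qed.

End DiscontinuousChainUnion.

Lemma image_closed {tau} (A E : structure tau) (k : car A -> car E) :
  is_embedding A E k -> closed_under (fint E) (fun y => exists x, k x = y).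
Proof.
  intros [_ [Hf _]] F ys Hy.
  exists (fint A F (fun i => proj1_sig (constructive_indefinite_description _ (Hy i)))).
  rewrite Hf. f_equal. apply functional_extensionality; intros i.
  destruct (constructive_indefinite_description _ (Hy i)); auto.
Qed.

Section ImageChain.
Variables (tau : vocab) (K : AEC tau) (I : Type) (lt : I -> I -> Prop).
Hypotheses (wo : well_order lt) (inh : inhabited I).
Variables (A : I -> structure tau) (E N : structure tau) (e : forall a, car (A a) -> car E)
  (psi : car E -> car N).
Hypotheses (A_inh : forall a, inhabited (car (A a)))
  (e_mono : forall a b, lt a b -> forall x, exists y, e b y = e a x)
  (e_leK : forall a, leK K (A a) E (e a))
  (psi_leK : forall a, leK K (A a) N (fun x => psi (e a x))).

Definition images_union (y : car E) : Prop := exists a x, e a x = y.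

Let image a := fun y => exists x, e a x = y.

Let image_closed_a a : closed_under (fint E) (image a) :=
  image_closed _ _ _ (leK_emb tau K _ _ _ (e_leK a)).

Lemma images_union_closed : closed_under (fint E) images_union.
Proof.
  apply (closed_under_iff tau _ (fun y => exists a, True /\ image a y)).
  - apply (closed_under_chain_union tau lt (wo_total I lt wo) (fun _ => True)); auto.
    + destruct inh as [a]; exists a; auto.
    + intros a b L y [x <-]. apply (e_mono a b L).
  - intros y; split; [intros [a [_ H]]; exists a; auto|intros [a H]; exists a; auto].
Qed.

Lemma images_union_leK :
  inK K (substructure (fint E) (rint E) images_union images_union_closed) /\
  leK K (substructure (fint E) (rint E) images_union images_union_closed) E (@proj1_sig _ _) /\
  leK K (substructure (fint E) (rint E) images_union images_union_closed) N
    (fun y => psi (proj1_sig y)).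
Proof.
  assert (stage_leK : forall (Z : structure tau) (phi : car E -> car Z),
    (forall a, leK K (A a) Z (fun x => phi (e a x))) ->
    forall a, leK K (substructure (fint E) (rint E) (image a) (image_closed_a a)) Z
                (fun y => phi (proj1_sig y))).
  { intros Z phi H a. apply (image_substructure_leK tau K (A a) E Z (e a)); auto.
    - apply (leK_emb tau K), e_leK.
    - exact (proj1 (leK_inK tau K _ _ _ (e_leK a))).
    - intros y; tauto. }
  assert (image_ne : forall a, exists y, image a y).
  { intros a. destruct (A_inh a) as [x]. exists (e a x), x; reflexivity. }
  assert (image_mono : forall a b, lt a b -> forall y, image a y -> image b y).
  { intros a b L y [x <-]. apply (e_mono a b L). }
  destruct (chain_union_leK tau K (car E) (fint E) (rint E) I lt image image_closed_a wo inh image_ne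
    image_mono images_union images_union_closed (fun y => iff_refl _) E (fun y => y)) as [H1 H2].
  { apply (stage_leK E (fun y => y)). intros a. apply e_leK. }
  split; [exact H1|split; [exact H2|]].
  apply (chain_union_leK tau K (car E) (fint E) (rint E) I lt image image_closed_a wo inh image_ne
    image_mono images_union images_union_closed (fun y => iff_refl _) N psi).
  apply (stage_leK N psi), psi_leK.
Qed.

End ImageChain.

(** * Amalgamating along the tree *)

Section TreeAmalgamation.
Variables (tau : vocab) (K : AEC tau) (Lam Kap W : Type) (ltW : W -> W -> Prop).
Hypotheses (hLinf : infinite_type Lam) (hKinf : infinite_type Kap) (hLK : card_le Lam Kap)
  (hW : is_succ_card_ordinal Lam ltW) (hAP : amalgamation K Kap).
Variables (T : wseq ltW -> Prop) (M : wseq ltW -> structure tau)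
  (h : forall eta nu : wseq ltW, car (M eta) -> car (M nu)).
Hypotheses (hT : is_subtree T) (hTne : exists eta, T eta) (hlev : levels_le T)
  (hM : forall eta, T eta -> inK K (M eta) /\ card_eq (car (M eta)) Kap)
  (hh : forall eta nu, T eta -> T nu -> initseg eta nu -> leK K (M eta) (M nu) (h eta nu))
  (hid : forall eta, T eta -> forall x, h eta eta x = x)
  (hcomp : forall eta nu rho, T eta -> T nu -> T rho -> initseg eta nu -> initseg nu rho ->
             forall x, h nu rho (h eta nu x) = h eta rho x).

Let woW : well_order ltW := proj1 hW.

Lemma W_inf : infinite_type W.
Proof. exact (succ_card_infinite Lam W ltW hLinf hW). Qed.

Definition k0 : Kap := proj1_sig (constructive_indefinite_description _ hKinf) 0.

Definition w_least : W :=
  proj1_sig (constructive_indefinite_description _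
    (wo_least W ltW woW (proj1_sig (constructive_indefinite_description _ W_inf) 0))).

Lemma w_least_spec : forall b, ~ ltW b w_least.
Proof. unfold w_least. destruct (constructive_indefinite_description _ _). exact n. Qed.

Definition root : wseq ltW := wseq_root W ltW w_least.

Lemma root_initseg_all eta : initseg root eta.
Proof. exact (root_initseg W ltW woW w_least w_least_spec eta). Qed.

Lemma T_root : T root.
Proof. destruct hTne as [eta Teta]. exact (hT root eta Teta (root_initseg_all eta)). Qed.

Lemma K_card_inhabited (A : structure tau) : K_card K Kap A -> inhabited (car A).
Proof. intros [_ [c [_ c_surj]]]. destruct (c_surj k0) as [x _]. exact (inhabits x). Qed.

Lemma M_inhabited eta : T eta -> inhabited (car (M eta)).
Proof. intros Te. apply K_card_inhabited, hM, Te. Qed.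

Definition enum : W -> wseq ltW :=
  proj1_sig (constructive_indefinite_description _
    (card_le_enum T root (tree_card_le T hlev (card_square_le W W_inf)))).

Lemma enum_surj eta : T eta -> exists a, enum a = eta.
Proof. unfold enum. destruct (constructive_indefinite_description _ _) as [e He]. exact (He eta). Qed.

Lemma h_leK_refl_or_initseg eta rho : T rho -> T eta -> (initseg rho eta \/ rho = eta) ->
  leK K (M rho) (M eta) (h rho eta).
Proof.
  intros Tr Te [I| ->]; [apply hh; auto|].
  apply (leK_ext tau K _ _ (fun x => x)); [apply leK_refl, hM, Te|]. intros x; rewrite hid; auto.
Qed.

Lemma h_comp_refl_or_initseg eta rho nu x : T rho -> T nu -> T eta ->
  (initseg nu eta \/ nu = eta) -> initseg rho nu -> h nu eta (h rho nu x) = h rho eta x.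
Proof. intros Tr Tn Te [I| ->] J; [apply hcomp; auto|apply hid; auto]. Qed.

(* Elements of the final model live in [option W * Kap]; the first component records the stage
   at which an element was added ([None] for the copy of [M root]). *)
Local Notation X := (option W * Kap)%type.

Record approx := Approx {
  acar : X -> Prop;
  afun : forall F, (fargs tau F -> X) -> X;
  arel : forall R, (rargs tau R -> X) -> Prop;
  aclosed : closed_under afun acar;
  adom : wseq ltW -> Prop;
  amap : forall eta, car (M eta) -> X }.

Definition amodel (s : approx) := substructure (afun s) (arel s) (acar s) (aclosed s).

Record approx_le (s t : approx) : Prop := {
  le_car : forall x, acar s x -> acar t x;
  le_ops : ops_agree_on (afun s) (afun t) (arel s) (arel t) (acar s);
  le_leK : incl_leK K (afun s) (arel s) (afun t) (arel t) (acar s) (acar t) (aclosed s) (aclosed t);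
  le_dom : forall eta, adom s eta -> adom t eta;
  le_map : forall eta, adom s eta -> amap s eta = amap t eta }.

Definition map_leK (s : approx) (eta : wseq ltW) : Prop :=
  exists g : car (M eta) -> car (amodel s), leK K (M eta) (amodel s) g /\
    forall x, proj1_sig (g x) = amap s eta x.

Record coherent (s : approx) : Prop := {
  coh_root : adom s root;
  coh_tree : forall eta, adom s eta -> T eta;
  coh_down : forall eta nu, adom s nu -> T eta -> initseg eta nu -> adom s eta;
  coh_leK : forall eta, adom s eta -> map_leK s eta;
  coh_comm : forall eta nu, adom s eta -> adom s nu -> initseg eta nu ->
    forall x, amap s nu (h eta nu x) = amap s eta x }.

Lemma approx_le_refl s : inK K (amodel s) -> approx_le s s.
Proof.
  intros H. split; auto.
  - apply ops_agree_on_refl.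
  - exists (fun x => x). split; auto. apply leK_refl, H.
Qed.

Lemma approx_le_trans s t u : approx_le s t -> approx_le t u -> approx_le s u.
Proof.
  intros [C1 [A1 B1] [g1 [L1 V1]] D1 E1] [C2 [A2 B2] [g2 [L2 V2]] D2 E2].
  split; auto.
  - split.
    + intros F xs Hx. rewrite A1, A2; auto.
    + intros R xs Hx. rewrite B1, B2; auto; tauto.
  - exists (fun x => g2 (g1 x)). split.
    + apply (leK_comp tau K _ _ _ g1 g2); auto.
    + intros x. rewrite V2, V1. reflexivity.
  - intros eta H. rewrite E1, E2; auto.
Qed.

Lemma map_leK_le s t eta : approx_le s t -> adom s eta -> map_leK s eta -> map_leK t eta.
Proof.
  intros Hst Hd [g [L V]]. destruct (le_leK _ _ Hst) as [g' [L' V']].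
  exists (fun x => g' (g x)). split.
  - apply (leK_comp tau K _ _ _ g g'); auto.
  - intros x. rewrite V', V, (le_map _ _ Hst eta Hd). reflexivity.
Qed.

Lemma base_approx : exists s, K_card K Kap (amodel s) /\ coherent s /\ (forall x, acar s x -> fst x = None).
Proof.
  destruct (hM root T_root) as [HK HC]. destruct HC as [c [c_inj _]].
  set (t := fun y : car (M root) => (None : option W, c y)).
  assert (t_inj : forall y y', t y = t y' -> y = y') by (intros y y' E; injection E; auto).
  destruct (copy_along_injection tau (M root) (None, k0) t t_inj) as [f [r [cl [hf hr]]]].
  set (s := Approx _ f r cl (fun rho => rho = root) (fun rho x => t (h rho root x))).
  assert (iso := copy_iso tau (M root) t t_inj f r cl hf hr).
  assert (inKs : inK K (amodel s)) by exact (inK_iso tau K _ _ _ HK iso).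
  exists s. split; [split; [exact inKs|]|split].
  - apply (is_iso_card tau _ _ _ _ iso). exact (proj2 (hM root T_root)).
  - split; simpl.
    + reflexivity.
    + intros eta ->. exact T_root.
    + intros eta nu -> _ I. apply (initseg_root W ltW w_least w_least_spec), I.
    + intros eta ->. exists (fun x => exist _ (t (h root root x)) (ex_intro _ _ eq_refl)).
      split; [|reflexivity].
      apply (leK_ext tau K _ _ _ _ (leK_iso tau K _ _ _ HK iso)).
      intros x. apply proj1_sig_inj. simpl. rewrite hid; auto. apply T_root.
    + intros eta nu -> -> _ x. rewrite (hid root T_root). reflexivity.
  - intros x [y <-]. reflexivity.
Qed.

Section Predecessors.
Variables (s : approx) (eta : wseq ltW).
Hypotheses (Ks : K_card K Kap (amodel s)) (cohs : coherent s) (Te : T eta).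

Definition pred_in_dom rho := adom s rho /\ initseg rho eta.

Lemma pred_in_dom_T rho : pred_in_dom rho -> T rho.
Proof. intros [H _]. exact (coh_tree s cohs rho H). Qed.

Lemma pred_embedding rho : pred_in_dom rho -> is_embedding (M rho) (M eta) (h rho eta).
Proof. intros Br. apply (leK_emb tau K), hh; auto; [apply pred_in_dom_T, Br|exact (proj2 Br)]. Qed.

(* Well defined because the maps of [s] commute with [h]. *)
Lemma pred_glued_map : exists phi : car (M eta) -> car (amodel s),
  forall rho x, pred_in_dom rho -> proj1_sig (phi (h rho eta x)) = amap s rho x.
Proof.
  destruct (K_card_inhabited _ Ks) as [z0].
  exists (fun y => epsilon (inhabits z0) (fun z : car (amodel s) =>
         exists rho x, pred_in_dom rho /\ h rho eta x = y /\ proj1_sig z = amap s rho x)).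
  intros rho x Br.
  destruct (coh_leK s cohs rho (proj1 Br)) as [g [_ Vg]].
  assert (Hex : exists z : car (amodel s), exists rho' x', pred_in_dom rho' /\
                  h rho' eta x' = h rho eta x /\ proj1_sig z = amap s rho' x') by (exists (g x), rho, x; auto).
  destruct (epsilon_spec (inhabits z0) _ Hex) as [rho' [x' [Br' [Eh Ez]]]].
  rewrite Ez.
  assert (Tr := pred_in_dom_T rho Br). assert (Tr' := pred_in_dom_T rho' Br').
  destruct (initseg_total W ltW woW rho rho' eta (proj2 Br) (proj2 Br')) as [J|J].
  - rewrite <- (hcomp rho rho' eta) in Eh by (auto; apply Br').
    apply (embedding_inj tau _ _ _ (pred_embedding rho' Br')) in Eh. subst x'.
    apply (coh_comm s cohs); auto; [apply Br|apply Br'].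
  - rewrite <- (hcomp rho' rho eta) in Eh by (auto; apply Br).
    apply (embedding_inj tau _ _ _ (pred_embedding rho Br)) in Eh. subst x.
    symmetry. apply (coh_comm s cohs); auto; [apply Br'|apply Br].
Qed.

Lemma predecessors_submodel :
  exists (U : structure tau) (uE : car U -> car (M eta)) (us : car U -> car (amodel s)),
    K_card K Kap U /\ leK K U (M eta) uE /\ leK K U (amodel s) us /\
    forall rho x, adom s rho -> initseg rho eta ->
      exists z, uE z = h rho eta x /\ proj1_sig (us z) = amap s rho x.
Proof.
  set (ltB := fun a b : {rho | pred_in_dom rho} => ltW (len (proj1_sig a)) (len (proj1_sig b))).
  assert (woB : well_order ltB) by (apply (initseg_chain_well_order W ltW woW _ eta); intros rho []; auto).
  assert (root_B : pred_in_dom root) by (split; [apply (coh_root s cohs)|apply root_initseg_all]).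
  assert (BT : forall a : {rho | pred_in_dom rho}, T (proj1_sig a))
    by (intros a; apply pred_in_dom_T, proj2_sig).
  destruct pred_glued_map as [phi phi_spec].
  assert (h_mono : forall a b, ltB a b -> forall x, exists y, h (proj1_sig b) eta y = h (proj1_sig a) eta x).
  { intros a b L x. exists (h _ _ x). apply hcomp; auto; [|apply (proj2_sig b)].
    apply (initseg_of_common W ltW woW _ _ eta); [apply (proj2_sig a)|apply (proj2_sig b)|auto]. }
  assert (phi_leK : forall a : {rho | pred_in_dom rho},
             leK K (M (proj1_sig a)) (amodel s) (fun x => phi (h (proj1_sig a) eta x))).
  { intros a. destruct (coh_leK s cohs (proj1_sig a) (proj1 (proj2_sig a))) as [g [Lg Vg]].
    apply (leK_ext tau K _ _ g); auto. intros x. apply proj1_sig_inj. rewrite Vg, phi_spec; auto.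
    apply proj2_sig. }
  destruct (images_union_leK tau K {rho | pred_in_dom rho} ltB woB (inhabits (exist _ root root_B))
    (fun a => M (proj1_sig a)) (M eta) (amodel s) (fun a => h (proj1_sig a) eta) phi
    (fun a => M_inhabited _ (BT a)) h_mono (fun a => hh _ _ (BT a) Te (proj2 (proj2_sig a))) phi_leK)
    as [inKU [UE Us]].
  eexists _, _, _. split; [split; [exact inKU|]|split; [exact UE|split; [exact Us|]]].
  - apply card_le_antisym.
    + apply (card_le_trans _ (car (M eta))); [|apply card_eq_le, (proj2 (hM eta Te))].
      exists (@proj1_sig _ _). intros a b; apply proj1_sig_inj.
    + apply (card_le_trans _ (car (M root))); [apply card_eq_ge, (proj2 (hM root T_root))|].
      exists (fun x => exist (images_union _ _ _ _ _) (h root eta x)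
                (ex_intro _ (exist _ root root_B) (ex_intro _ x eq_refl))).
      intros x y Exy. apply (embedding_inj tau _ _ _ (pred_embedding root root_B)).
      exact (f_equal (@proj1_sig _ _) Exy).
  - intros rho x Hr J.
    exists (exist (images_union _ _ _ _ _) (h rho eta x)
              (ex_intro _ (exist _ rho (conj Hr J)) (ex_intro _ x eq_refl))).
    split; [reflexivity|]. apply phi_spec. split; auto.
Qed.

End Predecessors.

Section Extension.
Variables (s : approx) (eta : wseq ltW) (N : structure tau) (f2 : car (M eta) -> car N)
  (t : car N -> X) (f : forall F, (fargs tau F -> X) -> X) (r : forall R, (rargs tau R -> X) -> Prop)
  (c : closed_under f (fun z => exists y, t y = z)).
Hypotheses (cohs : coherent s) (Te : T eta) (f2_leK : leK K (M eta) N f2)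
  (t_leK : leK K N (substructure f r _ c) (fun y => exist _ (t y) (ex_intro _ y eq_refl)))
  (t_f2 : forall rho x, adom s rho -> initseg rho eta -> t (f2 (h rho eta x)) = amap s rho x).

Definition extension_dom rho := adom s rho \/ (T rho /\ initseg rho eta) \/ rho = eta.

Definition extension_map rho (x : car (M rho)) : X :=
  if excluded_middle_informative (adom s rho) then amap s rho x else t (f2 (h rho eta x)).

Definition extension : approx := Approx _ f r c extension_dom extension_map.

Lemma extension_map_old rho : adom s rho -> extension_map rho = amap s rho.
Proof.
  intros Hr. apply functional_extensionality; intros x. unfold extension_map.
  destruct (excluded_middle_informative _); [reflexivity|contradiction].
Qed.

Lemma extension_map_new rho x : ~ adom s rho -> extension_map rho x = t (f2 (h rho eta x)).
Proof.
  intros Hr. unfold extension_map. destruct (excluded_middle_informative _); [contradiction|reflexivity].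
Qed.

Lemma extension_dom_T rho : extension_dom rho -> T rho.
Proof. intros [H|[[H _]| ->]]; [exact (coh_tree s cohs rho H)|exact H|exact Te]. Qed.

Lemma extension_dom_new rho : extension_dom rho -> ~ adom s rho -> initseg rho eta \/ rho = eta.
Proof. intros [Hr|[[_ Hr]|Hr]] Hn; [contradiction|left|right]; auto. Qed.

Lemma extension_coherent : (forall rho, adom s rho -> map_leK s rho -> map_leK extension rho) ->
  coherent extension.
Proof.
  intros map_le. split.
  - left. apply (coh_root s cohs).
  - exact extension_dom_T.
  - intros rho nu Hn Tr J. destruct Hn as [Hn|[[Tn Jn]| ->]].
    + left. apply (coh_down s cohs rho nu); auto.
    + right; left. split; auto. apply (initseg_trans W ltW woW _ nu); auto.
    + right; left; auto.
  - intros rho Hr. destruct (classic (adom s rho)) as [H0|H0]; [apply map_le, (coh_leK s cohs); auto|].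
    exists (fun x => exist _ (t (f2 (h rho eta x))) (ex_intro _ _ eq_refl)). split.
    + apply (leK_comp tau K (M rho) (M eta) (substructure f r _ c) (h rho eta)
               (fun z => exist _ (t (f2 z)) (ex_intro _ _ eq_refl))).
      * apply h_leK_refl_or_initseg, extension_dom_new; auto; apply extension_dom_T, Hr.
      * apply (leK_comp tau K (M eta) N _ f2 _ f2_leK t_leK).
    + intros x. symmetry. apply extension_map_new, H0.
  - intros rho nu Hr Hn J x. simpl.
    assert (Tr := extension_dom_T rho Hr). assert (Tn := extension_dom_T nu Hn).
    destruct (classic (adom s nu)) as [N0|N0].
    + assert (R0 : adom s rho) by (apply (coh_down s cohs rho nu); auto).
      rewrite !extension_map_old by auto. apply (coh_comm s cohs); auto.
    + assert (Jn := extension_dom_new nu Hn N0).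
      rewrite extension_map_new, (h_comp_refl_or_initseg eta rho nu x Tr Tn Te Jn J) by exact N0.
      destruct (classic (adom s rho)) as [R0|R0]; [|rewrite extension_map_new by exact R0; reflexivity].
      rewrite extension_map_old by exact R0. apply t_f2; auto.
      destruct Jn as [Jn|E]; [apply (initseg_trans W ltW woW _ nu); auto|rewrite <- E; exact J].
Qed.

End Extension.

(* Adding [eta] (with all its predecessors) to [s]: amalgamate [M eta] with the model of [s] over
   the common submodel of [predecessors_submodel], and copy the result into the universe using
   the fresh tag [Some beta]. *)
Lemma approx_step (s : approx) (beta : W) (eta : wseq ltW) :
  K_card K Kap (amodel s) -> coherent s -> (forall x, acar s x -> fst x <> Some beta) -> T eta ->
  exists s', K_card K Kap (amodel s') /\ approx_le s s' /\ coherent s' /\ adom s' eta /\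
    (forall x, acar s' x -> acar s x \/ fst x = Some beta).
Proof.
  intros Ks cohs fresh Te.
  destruct (predecessors_submodel s eta Ks cohs Te) as [U [uE [us [KU [LuE [Lus Hpred]]]]]].
  destruct (hAP U (amodel s) (M eta) us uE KU Ks (hM eta Te) Lus LuE)
    as [N [f1 [f2 [[inKN [cN [cN_inj cN_surj]]] [Lf1 [Lf2 Hcomm]]]]]].
  destruct (extend_injection (acar s) f1 (embedding_inj tau _ _ _ (leK_emb tau K _ _ _ Lf1))
              cN cN_inj (Some beta) fresh) as [t [t_inj [t_f1 t_new]]].
  destruct (copy_along_injection tau N (None, k0) t t_inj) as [f [r [c [hf hr]]]].
  destruct (copy_extends K (afun s) (arel s) (acar s) (aclosed s) N f1 Lf1 inKN t t_inj t_f1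
              f r c hf hr) as [car_le [ops_le model_le]].
  assert (iso := copy_iso tau N t t_inj f r c hf hr).
  assert (t_f2 : forall rho x, adom s rho -> initseg rho eta -> t (f2 (h rho eta x)) = amap s rho x).
  { intros rho x Hr J. destruct (Hpred rho x Hr J) as [z [<- Ez]]. rewrite <- Hcomm, t_f1. exact Ez. }
  set (s' := extension s eta N f2 t f r c).
  assert (s_le : approx_le s s').
  { split; [exact car_le|exact ops_le|exact model_le|intros rho Hr; left; exact Hr|].
    intros rho Hr. symmetry. apply extension_map_old, Hr. }
  exists s'. split; [|split; [exact s_le|split; [|split]]].
  - split; [exact (inK_iso tau K _ _ _ inKN iso)|].
    exact (is_iso_card tau _ _ _ _ iso (ex_intro _ cN (conj cN_inj cN_surj))).
  - apply extension_coherent; auto.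
    + apply leK_iso; [exact inKN|exact iso].
    + intros rho Hr. apply (map_leK_le s s' rho s_le Hr).
  - right; right; reflexivity.
  - intros z [y <-]. destruct (t_new y) as [[x <-]|Hc]; [left|right; exact Hc].
    rewrite t_f1. exact (proj2_sig x).
Qed.

Section Join.
Variables (D : W -> Prop) (chain : W -> approx).
Hypotheses (D_ne : exists g, D g) (D_down : forall g d, ltW g d -> D d -> D g)
  (chain_card : forall g, D g -> K_card K Kap (amodel (chain g)))
  (chain_le : forall g d, D d -> ltW g d -> approx_le (chain g) (chain d))
  (chain_cont : forall d, D d -> is_limit ltW d -> forall x, acar (chain d) x ->
                 exists g, ltW g d /\ acar (chain g) x)
  (chain_coh : forall g, D g -> coherent (chain g)).

Lemma chain_le_max g d : D g -> D d ->
  exists m, D m /\ approx_le (chain g) (chain m) /\ approx_le (chain d) (chain m).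
Proof.
  assert (le_refl : forall m, D m -> approx_le (chain m) (chain m))
    by (intros m Dm; apply approx_le_refl, chain_card, Dm).
  intros Dg Dd. destruct (wo_total W ltW woW g d) as [L|[<-|L]]; [exists d|exists g|exists g]; auto.
Qed.

Definition join_car (x : X) := exists g, D g /\ acar (chain g) x.

Definition join_fun F (xs : fargs tau F -> X) : X :=
  match excluded_middle_informative (exists g, D g /\ forall k, acar (chain g) (xs k)) with
  | left H => afun (chain (proj1_sig (constructive_indefinite_description _ H))) F xs
  | right _ => (None, k0) end.

Definition join_rel R (xs : rargs tau R -> X) : Prop :=
  match excluded_middle_informative (exists g, D g /\ forall k, acar (chain g) (xs k)) with
  | left H => arel (chain (proj1_sig (constructive_indefinite_description _ H))) R xs
  | right _ => False end.

Definition join_map (eta : wseq ltW) : car (M eta) -> X :=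
  match excluded_middle_informative (exists g, D g /\ adom (chain g) eta) with
  | left H => amap (chain (proj1_sig (constructive_indefinite_description _ H))) eta
  | right _ => fun _ => (None, k0) end.

Lemma join_ops_agree g : D g ->
  ops_agree_on (afun (chain g)) join_fun (arel (chain g)) join_rel (acar (chain g)).
Proof.
  intros Dg. split.
  - intros F xs Hx. unfold join_fun. destruct (excluded_middle_informative _) as [H|H]; [|exfalso; eauto].
    destruct (constructive_indefinite_description _ H) as [g1 [Dg1 H1]]. simpl.
    destruct (chain_le_max g g1 Dg Dg1) as [m [Dm [L1 L2]]].
    rewrite (proj1 (le_ops _ _ L1)), (proj1 (le_ops _ _ L2)); auto.
  - intros R xs Hx. unfold join_rel. destruct (excluded_middle_informative _) as [H|H]; [|exfalso; eauto].
    destruct (constructive_indefinite_description _ H) as [g1 [Dg1 H1]]. simpl.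
    destruct (chain_le_max g g1 Dg Dg1) as [m [Dm [L1 L2]]].
    rewrite (proj2 (le_ops _ _ L1)), (proj2 (le_ops _ _ L2)); auto. tauto.
Qed.

Lemma join_map_agree g eta : D g -> adom (chain g) eta -> join_map eta = amap (chain g) eta.
Proof.
  intros Dg Hg. unfold join_map. destruct (excluded_middle_informative _) as [H|H]; [|exfalso; eauto].
  destruct (constructive_indefinite_description _ H) as [g1 [Dg1 H1]]. simpl.
  destruct (chain_le_max g g1 Dg Dg1) as [m [Dm [L1 L2]]].
  rewrite (le_map _ _ L1), (le_map _ _ L2); auto.
Qed.

Lemma join_closed : closed_under join_fun join_car.
Proof.
  intros F xs Hx.
  destruct (chain_common_index ltW (wo_total W ltW woW) D D_ne
              (fun g x => exists g', D g' /\ (g' = g \/ ltW g' g) /\ acar (chain g') x)) with (xs := xs)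
    as [g [Dg Hg]].
  - intros i j L x [g' [Dg' [Lg' H']]]. exists g'. split; [auto|split; [|auto]].
    right. destruct Lg' as [<-|Lg']; [exact L|exact (wo_trans W ltW woW _ _ _ Lg' L)].
  - intros k. destruct (Hx k) as [g [Dg Hg]]. exists g; split; auto. exists g; auto.
  - assert (Hg' : forall k, acar (chain g) (xs k)).
    { intros k. destruct (Hg k) as [g' [Dg' [[<-|Lg'] H']]]; [exact H'|].
      apply (le_car _ _ (chain_le g' g Dg Lg')), H'. }
    exists g; split; auto. rewrite <- (proj1 (join_ops_agree g Dg)); [|exact Hg'].
    apply (aclosed (chain g)). exact Hg'.
Qed.

Definition join : approx :=
  Approx join_car join_fun join_rel join_closed (fun eta => exists g, D g /\ adom (chain g) eta) join_map.

Lemma join_stage_closed g : D g -> closed_under join_fun (acar (chain g)).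
Proof. intros Dg. exact (closed_under_agree tau _ _ _ _ _ (aclosed (chain g)) (join_ops_agree g Dg)). Qed.

Local Notation join_stage g Dg := (substructure join_fun join_rel (acar (chain g)) (join_stage_closed g Dg)).

Lemma join_stage_leK g (Dg : D g) : leK K (amodel (chain g)) (join_stage g Dg) (fun x => x) /\
  leK K (join_stage g Dg) (amodel (chain g)) (fun x => x).
Proof.
  assert (iso := substructure_agree_iso tau _ _ _ _ _ (aclosed (chain g)) (join_stage_closed g Dg)
                   (join_ops_agree g Dg)).
  assert (iso' := substructure_agree_iso tau _ _ _ _ _ (join_stage_closed g Dg) (aclosed (chain g))
                    (ops_agree_on_sym tau _ _ _ _ _ (join_ops_agree g Dg))).
  assert (inKg := proj1 (chain_card g Dg)).
  split; apply leK_iso; auto. exact (inK_iso tau K _ _ _ inKg iso).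
Qed.

Lemma join_le : inK K (amodel join) /\ (forall g, D g -> approx_le (chain g) join).
Proof.
  set (ltI := fun a b : {g | D g} => ltW (proj1_sig a) (proj1_sig b)).
  destruct (substructure_chain_union tau K X join_fun join_rel {g | D g} ltI
              (fun a => acar (chain (proj1_sig a)))
              (fun a => join_stage_closed _ (proj2_sig a)) (restrict_well_order ltW D woW))
    with (Qu := join_car) (cu := join_closed) as [inKj [Lj _]].
  - destruct D_ne as [g Dg]. exact (inhabits (exist _ g Dg)).
  - intros a. destruct (K_card_inhabited _ (chain_card _ (proj2_sig a))) as [[y Hy]]. exists y; exact Hy.
  - intros a b L. apply (le_car _ _ (chain_le _ _ (proj2_sig b) L)).
  - intros y; split.
    + intros [g [Dg H]]. exists (exist _ g Dg). exact H.
    + intros [a H]. exists (proj1_sig a). split; [exact (proj2_sig a)|exact H].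
  - intros a. exact (proj1 (leK_inK tau K _ _ _ (proj2 (join_stage_leK _ (proj2_sig a))))).
  - intros [g Dg] [d Dd] L. destruct (le_leK _ _ (chain_le _ _ Dd L)) as [k [Lk Vk]].
    exists k. split; [|exact Vk].
    apply (leK_comp tau K (join_stage g Dg) (amodel (chain g)) (join_stage d Dd) (fun x => x) (fun x => k x)
             (proj2 (join_stage_leK g Dg))).
    exact (leK_comp tau K (amodel (chain g)) (amodel (chain d)) (join_stage d Dd) k (fun x => x)
             Lk (proj1 (join_stage_leK d Dd))).
  - intros j lj y Hy.
    assert (lj' := is_limit_restrict ltW D D_down j lj).
    destruct (chain_cont _ (proj2_sig j) lj' y Hy) as [g [Lg Hg]].
    exists (exist _ g (D_down g (proj1_sig j) Lg (proj2_sig j))). auto.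
  - split; [exact inKj|]. intros g Dg. split.
    + intros x Hx. exists g; auto.
    + apply join_ops_agree; auto.
    + destruct (Lj (exist _ g Dg)) as [k [Lk Vk]]. exists k. split; [|exact Vk].
      exact (leK_comp tau K (amodel (chain g)) (join_stage g Dg) (amodel join) (fun x => x) k
               (proj1 (join_stage_leK g Dg)) Lk).
    + intros eta He. exists g; auto.
    + intros eta He. symmetry. apply join_map_agree; auto.
Qed.

Lemma join_coherent : coherent join.
Proof.
  destruct D_ne as [g0 Dg0]. split.
  - exists g0. split; auto. apply (coh_root _ (chain_coh g0 Dg0)).
  - intros eta [g [Dg Hg]]. apply (coh_tree _ (chain_coh g Dg) eta Hg).
  - intros eta nu [g [Dg Hg]] Te J. exists g. split; auto. apply (coh_down _ (chain_coh g Dg) eta nu); auto.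
  - intros eta [g [Dg Hg]].
    apply (map_leK_le (chain g) join eta (proj2 join_le g Dg) Hg), (coh_leK _ (chain_coh g Dg)), Hg.
  - intros eta nu [g [Dg Hg]] [d [Dd Hd]] J x. simpl.
    destruct (chain_le_max g d Dg Dd) as [m [Dm [L1 L2]]].
    rewrite (join_map_agree m eta Dm (le_dom _ _ L1 _ Hg)), (join_map_agree m nu Dm (le_dom _ _ L2 _ Hd)).
    apply (coh_comm _ (chain_coh m Dm)); auto; [apply (le_dom _ _ L1)|apply (le_dom _ _ L2)]; auto.
Qed.

End Join.

Lemma bounded_tags_card_le (a : W) (P : X -> Prop) :
  (forall x, P x -> fst x = None \/ exists g, fst x = Some g /\ ltW g a) -> card_le {x | P x} Kap.
Proof.
  intros HP. destruct (proj1 (proj2 hW) a) as [si si_inj].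
  set (code := fun o : option W => match o with None => None | Some g =>
         match excluded_middle_informative (ltW g a) with
         | left p => Some (si (exist _ g p)) | right _ => None end end).
  apply (card_le_trans _ (option Lam * Kap)).
  - exists (fun x => (code (fst (proj1_sig x)), snd (proj1_sig x))).
    intros [[o1 k1] H1] [[o2 k2] H2] E. simpl in E. injection E as Eo <-.
    apply proj1_sig_inj. simpl. f_equal.
    destruct (HP _ H1) as [E1|[g1 [E1 L1]]]; destruct (HP _ H2) as [E2|[g2 [E2 L2]]];
      simpl in E1, E2; subst o1 o2; auto; unfold code in Eo;
      repeat destruct (excluded_middle_informative _); try discriminate; try contradiction.
    injection Eo as Eo. apply si_inj in Eo. injection Eo as ->. reflexivity.
  - apply (card_le_trans _ (option Kap * Kap)).
    { apply card_le_prod; [apply card_le_option; auto|apply card_le_refl]. }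
    apply (card_le_trans _ (Kap * Kap)).
    { apply card_le_prod; [apply card_option_le; auto|apply card_le_refl]. }
    apply card_square_le; auto.
Qed.

Record stage_spec (a : W) (prev : forall g, ltW g a -> approx) (s : approx) : Prop := {
  st_card : K_card K Kap (amodel s);
  st_le : forall g (p : ltW g a), approx_le (prev g p) s;
  st_tags : forall x, acar s x -> fst x = None \/ exists g, fst x = Some g /\ ltW g a;
  st_coh : coherent s;
  st_enum : forall g, ltW g a -> T (enum g) -> adom s (enum g);
  st_cont : is_limit ltW a -> forall x, acar s x -> exists g (p : ltW g a), acar (prev g p) x }.

(* Junk value of the recursion, never reached. *)
Definition default_approx : approx :=
  Approx (fun _ => True) (fun F xs => (None, k0)) (fun _ _ => False) (fun F xs _ => I)
    (fun _ => False) (fun _ _ => (None, k0)).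

Definition stage_step (a : W) (prev : forall g, ltW g a -> approx) : approx :=
  match excluded_middle_informative (exists s, stage_spec a prev s) with
  | left H => proj1_sig (constructive_indefinite_description _ H)
  | right _ => default_approx end.

Definition stage : W -> approx := Fix (proj1 woW) (fun _ => approx) stage_step.

Lemma stage_eq a : stage a = stage_step a (fun g _ => stage g).
Proof.
  apply (Fix_eq (proj1 woW) (fun _ => approx) stage_step).
  intros x f g E. f_equal. apply functional_extensionality_dep; intros y.
  apply functional_extensionality_dep; intros p. apply E.
Qed.

Section StageInduction.
Variable a : W.
Hypothesis IH : forall g, ltW g a -> stage_spec g (fun d _ => stage d) (stage g).

Lemma stage_spec_zero : (forall g, ~ ltW g a) -> exists s, stage_spec a (fun g _ => stage g) s.
Proof.
  intros Ha. destruct base_approx as [s [Ks [cohs tags]]]. exists s.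
  split; auto.
  - intros g p; destruct (Ha g p).
  - intros g p; destruct (Ha g p).
  - intros [[g p] _]. destruct (Ha g p).
Qed.

Lemma stage_spec_limit : is_limit ltW a -> exists s, stage_spec a (fun g _ => stage g) s.
Proof.
  intros la.
  assert (S_le : forall g d, ltW d a -> ltW g d -> approx_le (stage g) (stage d)).
  { intros g d pd L. exact (st_le _ _ _ (IH d pd) g L). }
  assert (S_cont : forall d, ltW d a -> is_limit ltW d -> forall x, acar (stage d) x ->
                     exists g, ltW g d /\ acar (stage g) x).
  { intros d pd ld x Hx. destruct (st_cont _ _ _ (IH d pd) ld x Hx) as [g [p H]]. eauto. }
  assert (D_down : forall g d, ltW g d -> ltW d a -> ltW g a) by (intros; eapply wo_trans; eauto).
  assert (S_card : forall g, ltW g a -> K_card K Kap (amodel (stage g))) by (intros g p; apply (IH g p)).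
  destruct (join_le (fun g => ltW g a) stage (proj1 la) D_down S_card S_le S_cont) as [inKj S_join].
  assert (cohj := join_coherent (fun g => ltW g a) stage (proj1 la) D_down S_card S_le S_cont
                    (fun g p => st_coh _ _ _ (IH g p))).
  set (J := join (fun g => ltW g a) stage (proj1 la) S_card S_le) in *.
  assert (tags : forall x, acar J x -> fst x = None \/ exists g, fst x = Some g /\ ltW g a).
  { intros x [g [pg Hg]]. destruct (st_tags _ _ _ (IH g pg) x Hg) as [E|[d [E L]]]; [left; auto|right].
    exists d; split; auto. eapply wo_trans; eauto. }
  exists J. split; auto.
  - split; [exact inKj|]. destruct (proj1 la) as [g0 p0]. apply card_le_antisym.
    + exact (bounded_tags_card_le a _ tags).
    + apply (card_le_trans _ (car (amodel (stage g0)))); [apply card_eq_ge, (st_card _ _ _ (IH g0 p0))|].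
      exists (fun x => exist _ (proj1_sig x) (ex_intro _ g0 (conj p0 (proj2_sig x)))).
      intros x y E. apply proj1_sig_inj. exact (f_equal (@proj1_sig _ _) E).
  - intros g p Tg. destruct (proj2 la g p) as [k [L1 L2]].
    exists k. split; auto. apply (st_enum _ _ _ (IH k L2)); auto.
  - intros _ x [g [pg Hg]]. exists g, pg. exact Hg.
Qed.

Lemma stage_spec_succ b : ltW b a -> (forall g, ltW g a -> g = b \/ ltW g b) ->
  exists s, stage_spec a (fun g _ => stage g) s.
Proof.
  intros pb Hb.
  assert (not_limit : ~ is_limit ltW a).
  { intros [_ la]. destruct (la b pb) as [k [L1 L2]]. destruct (Hb k L2) as [->|L].
    - exact (wo_irrefl W ltW woW _ L1). - exact (wo_asym W ltW woW _ _ L1 L). }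
  destruct (IH b pb) as [Kb le_b tags_b coh_b enum_b _].
  assert (fresh : forall x, acar (stage b) x -> fst x <> Some b).
  { intros x Hx E. destruct (tags_b x Hx) as [E'|[g [E' L]]]; rewrite E in E'; [discriminate|].
    injection E' as ->. exact (wo_irrefl W ltW woW _ L). }
  assert (spec : forall s, K_card K Kap (amodel s) -> approx_le (stage b) s -> coherent s ->
            (T (enum b) -> adom s (enum b)) ->
            (forall x, acar s x -> acar (stage b) x \/ fst x = Some b) -> stage_spec a (fun g _ => stage g) s).
  { intros s Ks Ls cohs Hs new. split; auto.
    - intros g p. destruct (Hb g p) as [->|L]; [exact Ls|exact (approx_le_trans _ _ _ (le_b g L) Ls)].
    - intros x Hx. destruct (new x Hx) as [H|H]; [|right; exists b; auto].
      destruct (tags_b x H) as [E|[g [E L]]]; [left; auto|right].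
      exists g; split; auto. eapply wo_trans; eauto.
    - intros g p Tg. destruct (Hb g p) as [->|L]; [auto|].
      apply (le_dom _ _ Ls), enum_b; auto.
    - intros l; contradiction. }
  destruct (classic (T (enum b))) as [Te|Tn].
  - destruct (approx_step (stage b) b (enum b) Kb coh_b fresh Te) as [s [Ks [Ls [cohs [Hs new]]]]].
    exists s. apply spec; auto.
  - exists (stage b). apply spec; auto.
    + apply approx_le_refl, Kb.
    + intros Te; contradiction.
Qed.

End StageInduction.

Lemma stage_spec_holds a : stage_spec a (fun g _ => stage g) (stage a).
Proof.
  induction a as [a IH] using (well_founded_ind (proj1 woW)).
  assert (Hex : exists s, stage_spec a (fun g _ => stage g) s).
  { destruct (classic (exists g, ltW g a)) as [Hne|Hne];
      [|apply (stage_spec_zero a); intros g p; apply Hne; eauto].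
    destruct (classic (is_limit ltW a)) as [Hl|Hl]; [exact (stage_spec_limit a IH Hl)|].
    assert (Hmax : exists b, ltW b a /\ forall g, ltW g a -> g = b \/ ltW g b).
    { apply NNPP. intros Hn. apply Hl. split; auto. intros g p. apply NNPP. intros Hk.
      apply Hn. exists g. split; auto. intros d pd.
      destruct (wo_total W ltW woW d g) as [L|[L|L]]; auto. exfalso; apply Hk; eauto. }
    destruct Hmax as [b [pb Hb]]. exact (stage_spec_succ a IH b pb Hb). }
  rewrite stage_eq. unfold stage_step.
  destruct (excluded_middle_informative _) as [H|H]; [|contradiction].
  exact (proj2_sig (constructive_indefinite_description _ H)).
Qed.

Lemma tree_approx : exists s, inK K (amodel s) /\ coherent s /\ (forall eta, T eta -> adom s eta).
Proof.
  destruct W_inf as [i _].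
  assert (S_le : forall g d, True -> ltW g d -> approx_le (stage g) (stage d)).
  { intros g d _ L. exact (st_le _ _ _ (stage_spec_holds d) g L). }
  assert (S_cont : forall d, True -> is_limit ltW d -> forall x, acar (stage d) x ->
                     exists g, ltW g d /\ acar (stage g) x).
  { intros d _ ld x Hx. destruct (st_cont _ _ _ (stage_spec_holds d) ld x Hx) as [g [p H]]. eauto. }
  assert (S_card : forall g, True -> K_card K Kap (amodel (stage g))) by (intros g _; apply stage_spec_holds).
  destruct (join_le (fun _ => True) stage (ex_intro _ (i 0) I) (fun _ _ _ _ => I) S_card S_le S_cont)
    as [inKj _].
  assert (cohj := join_coherent (fun _ => True) stage (ex_intro _ (i 0) I) (fun _ _ _ _ => I) S_card S_le
                    S_cont (fun g _ => st_coh _ _ _ (stage_spec_holds g))).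
  exists (join (fun _ => True) stage (ex_intro _ (i 0) I) S_card S_le).
  split; [exact inKj|split; [exact cohj|]].
  intros eta Te. destruct (enum_surj eta Te) as [a <-].
  destruct (succ_card_no_max Lam W ltW hLinf hW a) as [d L].
  exists d. split; auto. apply (st_enum _ _ _ (stage_spec_holds d)); auto.
Qed.

Lemma coherent_maps s : coherent s -> (forall eta, T eta -> adom s eta) ->
  exists g : forall eta, car (M eta) -> car (amodel s),
    (forall eta, T eta -> leK K (M eta) (amodel s) (g eta)) /\
    (forall eta nu, T eta -> T nu -> initseg eta nu -> forall x, g nu (h eta nu x) = g eta x).
Proof.
  intros cohs domT.
  assert (inh : inhabited (car (amodel s))).
  { destruct (coh_leK s cohs root (coh_root s cohs)) as [g _]. destruct (M_inhabited root T_root) as [x].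
    exact (inhabits (g x)). }
  set (g := fun eta (x : car (M eta)) => epsilon inh (fun z => proj1_sig z = amap s eta x)).
  assert (g_val : forall eta x, T eta -> proj1_sig (g eta x) = amap s eta x).
  { intros eta x Te. destruct (coh_leK s cohs eta (domT eta Te)) as [g' [_ V]].
    apply (epsilon_spec inh (fun z => proj1_sig z = amap s eta x)). exists (g' x); auto. }
  exists g. split.
  - intros eta Te. destruct (coh_leK s cohs eta (domT eta Te)) as [g' [Lg V]].
    apply (leK_ext tau K _ _ g'); auto. intros x. apply proj1_sig_inj. rewrite V, g_val; auto.
  - intros eta nu Te Tn J x. apply proj1_sig_inj. rewrite !g_val; auto. apply (coh_comm s cohs); auto.
Qed.

Lemma amodel_card_le s : card_le (car (amodel s)) (Kap * W).
Proof.
  apply (card_le_trans _ X).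
  - exists (@proj1_sig _ _). intros a b; apply proj1_sig_inj.
  - apply (card_le_trans _ (W * Kap)).
    + apply card_le_prod; [apply card_option_le, W_inf|apply card_le_refl].
    + exists (fun p => (snd p, fst p)). intros [a b] [c d] E. injection E as -> ->. reflexivity.
Qed.

End TreeAmalgamation.

Theorem claim2p16 (tau : vocab) (K : AEC tau) (Lam Kap W : Type)
  (ltW : W -> W -> Prop)
  (hLinf : infinite_type Lam) (hKinf : infinite_type Kap) (hLK : card_le Lam Kap)
  (hW : is_succ_card_ordinal Lam ltW)
  (hLS : LS_property (inK K) (leK K) Kap) (hAP : amalgamation K Kap)
  (T : wseq ltW -> Prop) (hT : is_subtree T) (hTne : exists eta, T eta)
  (hlev : levels_le T)
  (M : wseq ltW -> structure tau)
  (h : forall eta nu : wseq ltW, car (M eta) -> car (M nu))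
  (hM : forall eta, T eta -> inK K (M eta) /\ card_eq (car (M eta)) Kap)
  (hh : forall eta nu, T eta -> T nu -> initseg eta nu -> leK K (M eta) (M nu) (h eta nu))
  (hid : forall eta, T eta -> forall x, h eta eta x = x)
  (hcomp : forall eta nu rho, T eta -> T nu -> T rho -> initseg eta nu -> initseg nu rho ->
             forall x, h nu rho (h eta nu x) = h eta rho x) :
  exists (Ms : structure tau) (g : forall eta, car (M eta) -> car Ms),
    inK K Ms /\
    (forall eta, T eta -> leK K (M eta) Ms (g eta)) /\
    (forall eta nu, T eta -> T nu -> initseg eta nu -> forall x, g nu (h eta nu x) = g eta x) /\
    card_le (car Ms) (Kap * W).
Proof.
  destruct (tree_approx tau K Lam Kap W ltW hLinf hKinf hLK hW hAP T M h hT hTne hlev hM hh hid hcomp)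
    as [s [inKs [cohs domT]]].
  destruct (coherent_maps tau K Lam Kap W ltW hLinf hKinf hW T M h hT hTne hM s cohs domT)
    as [g [g_leK g_comm]].
  exists (amodel tau Kap W ltW M s), g.
  split; [exact inKs|split; [exact g_leK|split; [exact g_comm|]]].
  exact (amodel_card_le tau Lam Kap W ltW hLinf hW M s).
Qed.
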